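(* Let $\mathbb{S}=[0,1]$ with $0$ and $1$ identified, and let $H:\mathbb{S}\times\mathbb{R}\times\mathbb{R}\to\mathbb{R}$ be $C^\infty$ with $\frac{\partial^2H}{\partial p^2}>0$, $p\mapsto H(x,p,u)$ superlinear for each $(x,u)$, and $|\frac{\partial H}{\partial u}|\le\kappa$ for some $\kappa>0$. Let $u_0$ be a viscosity solution of $H(x,u'(x),u(x))=0$ on $\mathbb{S}$ such that $\frac{\partial H}{\partial p}(x,u_0'(x),u_0(x))\ne0$ at every differentiability point $x$ of $u_0$. Set $B(x)=\frac{\partial H}{\partial p}(x,u_0'(x),u_0(x))$, $$\mu=\frac{\int_0^1\frac{\partial H}{\partial u}(\tau,u_0'(\tau),u_0(\tau))B(\tau)^{-1}d\tau}{\int_0^1B(\tau)^{-1}d\tau},\qquad \rho(x)=\exp\left\{\int_0^x\frac{\mu-\frac{\partial H}{\partial u}(\tau,u_0'(\tau),u_0(\tau))}{B(\tau)}\,d\tau\right\}.$$ Assume $\mu\ne0$ and set $u_\epsilon(x)=u_0(x)-\frac{\mu}{|\mu|}\,\epsilon\,\rho(x)$. Then there exists $\epsilon_0>0$ such that: (1) for $\epsilon\in(0,\epsilon_0]$, $u_\epsilon$ is a $C^\infty$ function on $\mathbb{S}$ with $H(x,u_\epsilon'(x),u_\epsilon(x))<0$ for all $x\in\mathbb{S}$; (2) for $\epsilon\in[-\epsilon_0,0)$, $u_\epsilon$ is a $C^\infty$ function on $\mathbb{S}$ with $H(x,u_\epsilon'(x),u_\epsilon(x))>0$ for all $x\in\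mathbb{S}$.
   Context: It is known that under these assumptions $u_0$ is of class $C^\infty$, so $B$ is smooth and nowhere zero, and $\rho$ is a smooth positive function on $\mathbb{S}$ (with $\rho(0)=\rho(1)=1$). *)

From Stdlib Require Import Reals.
From Coquelicot Require Import Coquelicot.
Open Scope R_scope.

(* Functions on the circle S = [0,1]/(0~1) are represented as 1-periodic
   functions on R. *)
Definition periodic1 (f : R -> R) : Prop := forall x, f (x + 1) = f x.

Definition dx (F : R -> R -> R -> R) : R -> R -> R -> R :=
  fun x p u => Derive (fun t => F t p u) x.
Definition dp (F : R -> R -> R -> R) : R -> R -> R -> R :=
  fun x p u => Derive (fun t => F x t u) p.
Definition du (F : R -> R -> R -> R) : R -> R -> R -> R :=
  fun x p u => Derive (fun t => F x p t) u.

(* Iterated partial derivative along a list of directions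
   (0 = x, 1 = p, anything else = u); the head is applied last. *)
Fixpoint iter_partial (l : list nat) (F : R -> R -> R -> R) : R -> R -> R -> R :=
  match l with
  | nil => F
  | cons 0 l' => dx (iter_partial l' F)
  | cons 1 l' => dp (iter_partial l' F)
  | cons _ l' => du (iter_partial l' F)
  end.

Definition smooth3 (F : R -> R -> R -> R) : Prop :=
  forall l : list nat,
    (forall x p u,
       ex_derive (fun t => iter_partial l F t p u) x /\
       ex_derive (fun t => iter_partial l F x t u) p /\
       ex_derive (fun t => iter_partial l F x p t) u) /\
    (forall q : R * R * R,
       continuous (fun q : R * R * R =>
          iter_partial l F (fst (fst q)) (snd (fst q)) (snd q)) q).

Definition smooth1 (f : R -> R) : Prop := forall n x, ex_derive_n f n x.

Definition C1 (phi : R -> R) : Prop :=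
  (forall x, ex_derive phi x) /\ (forall x, continuous (Derive phi) x).

Definition local_max_at (g : R -> R) (x0 : R) : Prop :=
  exists d, 0 < d /\ forall y, Rabs (y - x0) < d -> g y <= g x0.
Definition local_min_at (g : R -> R) (x0 : R) : Prop :=
  exists d, 0 < d /\ forall y, Rabs (y - x0) < d -> g x0 <= g y.

Definition viscosity_subsolution (H : R -> R -> R -> R) (u : R -> R) : Prop :=
  forall (phi : R -> R) (x0 : R), C1 phi ->
    local_max_at (fun y => u y - phi y) x0 -> H x0 (Derive phi x0) (u x0) <= 0.
Definition viscosity_supersolution (H : R -> R -> R -> R) (u : R -> R) : Prop :=
  forall (phi : R -> R) (x0 : R), C1 phi ->
    local_min_at (fun y => u y - phi y) x0 -> 0 <= H x0 (Derive phi x0) (u x0).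
Definition viscosity_solution (H : R -> R -> R -> R) (u : R -> R) : Prop :=
  periodic1 u /\ (forall x, continuous u x) /\
  viscosity_subsolution H u /\ viscosity_supersolution H u.

Definition superlinear_in_p (H : R -> R -> R -> R) : Prop :=
  forall x u M, exists R0, forall p, R0 <= Rabs p -> M * Rabs p <= H x p u.

Definition Bfun (H : R -> R -> R -> R) (u0 : R -> R) (x : R) : R :=
  dp H x (Derive u0 x) (u0 x).
Definition Hu_along (H : R -> R -> R -> R) (u0 : R -> R) (x : R) : R :=
  du H x (Derive u0 x) (u0 x).
Definition mu_of (H : R -> R -> R -> R) (u0 : R -> R) : R :=
  RInt (fun t => Hu_along H u0 t / Bfun H u0 t) 0 1 /
  RInt (fun t => / Bfun H u0 t) 0 1.
Definition rho_of (H : R -> R -> R -> R) (u0 : R -> R) (x : R) : R :=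
  exp (RInt (fun t => (mu_of H u0 - Hu_along H u0 t) / Bfun H u0 t) 0 x).
Definition u_eps (H : R -> R -> R -> R) (u0 : R -> R) (eps x : R) : R :=
  u0 x - (mu_of H u0 / Rabs (mu_of H u0)) * eps * rho_of H u0 x.

From Stdlib Require Import Reals Lra Classical ClassicalEpsilon.
From Coquelicot Require Import Coquelicot.
Open Scope R_scope.

(* Write [K(x, q) = H(x, q, u0(x))]; it is strictly convex and superlinear in [q].
   Testing [u0] with parabolas shows that [u0] has one-sided derivatives everywhere
   and that they are roots of [K(x, .)]; the supersolution property excludes convex
   kinks, so at a non-differentiable point [u0] has a concave kink [r < l] with
   [Kd x r < 0], where [Kd = dK/dq].  Such a kink propagates: [u0] stays
   differentiable with [Kd x u0'(x) < 0] to its right, and by the nondegeneracy of [B] it does so up to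
   [x + 1], which by periodicity is [x] itself.  Hence [u0] is C^1 with
   [H(x, u0', u0) = 0] and [B <> 0], and the implicit function formula bootstraps it
   to C^oo.  The choice of [mu] makes [int_0^1 (mu - H_u) / B = 0], so [rho] is
   periodic and solves [B rho' + H_u rho = mu rho].  Therefore
   [d/d eps H(x, u_eps', u_eps)] at [eps = 0] is [- |mu| rho(x) < 0], uniformly in
   [x], and the mean value theorem gives the signs. *)

Lemma continuous_R_iff (f : R -> R) x :
  continuous f x <->
  forall eps, 0 < eps -> exists d, 0 < d /\
    forall y, Rabs (y - x) < d -> Rabs (f y - f x) < eps.
Proof.
  split.
  - intros Hc eps He. apply continuity_pt_filterlim in Hc.
    destruct (Hc eps He) as [d [Hd H]]. exists d; split; [exact Hd|]. intros y Hy.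
    destruct (Req_dec y x) as [->|Hne]; [rewrite Rminus_eq_0, Rabs_R0; exact He|].
    apply (H y). split; [split; [exact I| intro E; apply Hne; auto]| exact Hy].
  - intro H. apply continuity_pt_filterlim. intros eps He.
    destruct (H eps He) as [d [Hd Hy]].
    exists d; split; [exact Hd|]. intros y [_ Hyd]. apply Hy. exact Hyd.
Qed.

Lemma ex_derive_continuous_R (f : R -> R) x : ex_derive f x -> continuous f x.
Proof. apply (ex_derive_continuous (V := R_NormedModule)). Qed.

Lemma is_derive_continuous_R (f : R -> R) x l : is_derive f x l -> continuous f x.
Proof. intro H. apply ex_derive_continuous_R. exists l; exact H. Qed.

Lemma continuous_max_on (f : R -> R) a b : a <= b -> (forall x, continuous f x) ->
  exists m, a <= m <= b /\ forall y, a <= y <= b -> f y <= f m.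
Proof.
  intros Hab Hc. destruct (continuity_ab_maj f a b Hab) as [m [Hm1 Hm2]].
  - intros c _. apply continuity_pt_filterlim, Hc.
  - exists m; split; assumption.
Qed.

Lemma continuous_min_on (f : R -> R) a b : a <= b -> (forall x, continuous f x) ->
  exists m, a <= m <= b /\ forall y, a <= y <= b -> f m <= f y.
Proof.
  intros Hab Hc. destruct (continuity_ab_min f a b Hab) as [m [Hm1 Hm2]].
  - intros c _. apply continuity_pt_filterlim, Hc.
  - exists m; split; assumption.
Qed.

Lemma continuous_bounded_on (f : R -> R) a b : a <= b -> (forall x, continuous f x) ->
  exists M, 0 <= M /\ forall x, a <= x <= b -> Rabs (f x) <= M.
Proof.
  intros Hab Hc.
  destruct (continuous_max_on f a b Hab Hc) as [xM [_ HM]].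
  destruct (continuous_min_on f a b Hab Hc) as [xm [_ Hm]].
  exists (Rabs (f xM) + Rabs (f xm)).
  split; [pose proof (Rabs_pos (f xM)); pose proof (Rabs_pos (f xm)); lra|].
  intros x Hx. specialize (HM x Hx). specialize (Hm x Hx).
  apply Rabs_le_between. split.
  - pose proof (Rabs_pos (f xM)); pose proof (Rle_abs (- f xm)). rewrite Rabs_Ropp in *. lra.
  - pose proof (Rabs_pos (f xm)); pose proof (Rle_abs (f xM)). lra.
Qed.

Lemma MVT_Derive (f : R -> R) a b : a < b ->
  (forall x, a <= x <= b -> ex_derive f x) -> (forall x, continuous f x) ->
  exists c, a <= c <= b /\ (f b - f a) / (b - a) = Derive f c.
Proof.
  intros Hab Hd Hc.
  destruct (MVT_gen f a b (Derive f)) as [c [Hc' Heq]].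
  - intros x Hx. rewrite Rmin_left, Rmax_right in Hx by lra. apply Derive_correct, Hd; lra.
  - intros x _. apply continuity_pt_filterlim, Hc.
  - rewrite Rmin_left, Rmax_right in Hc' by lra. exists c; split; [exact Hc'|].
    rewrite Heq. field; lra.
Qed.

Lemma local_max_at_of_interval (G : R -> R) a b m :
  a < m < b -> (forall y, a <= y <= b -> G y <= G m) -> local_max_at G m.
Proof.
  intros Hm H. exists (Rmin (m - a) (b - m)); split; [apply Rmin_pos; lra|].
  intros y Hy. apply H. apply Rabs_lt_between' in Hy.
  pose proof (Rmin_l (m - a) (b - m)); pose proof (Rmin_r (m - a) (b - m)). lra.
Qed.

Lemma local_min_at_of_interval (G : R -> R) a b m :
  a < m < b -> (forall y, a <= y <= b -> G m <= G y) -> local_min_at G m.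
Proof.
  intros Hm H. exists (Rmin (m - a) (b - m)); split; [apply Rmin_pos; lra|].
  intros y Hy. apply H. apply Rabs_lt_between' in Hy.
  pose proof (Rmin_l (m - a) (b - m)); pose proof (Rmin_r (m - a) (b - m)). lra.
Qed.

Lemma sign_change_at_root (f : R -> R) p d eta :
  is_derive f p d -> f p = 0 -> d <> 0 -> 0 < eta ->
  exists e, 0 < e <= eta /\ f (p - e) * d < 0 /\ 0 < f (p + e) * d.
Proof.
  intros Hd Hp Hnz Heta. apply is_derive_Reals in Hd.
  assert (Had : 0 < Rabs d) by (apply Rabs_pos_lt; exact Hnz).
  destruct (Hd (Rabs d / 2) ltac:(lra)) as [delta Hdelta].
  pose proof (cond_pos delta) as Hdp.
  set (e := Rmin eta (delta / 2)).
  assert (He : 0 < e <= eta /\ e < delta).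
  { unfold e. pose proof (Rmin_l eta (delta / 2)); pose proof (Rmin_r eta (delta / 2)).
    pose proof (Rmin_pos eta (delta / 2) Heta ltac:(lra)). lra. }
  assert (Hsign : forall h, h <> 0 -> Rabs h < delta -> 0 < f (p + h) / h * d).
  { intros h Hh Hhd. specialize (Hdelta h Hh Hhd). rewrite Hp, Rminus_0_r in Hdelta.
    apply Rabs_lt_between' in Hdelta.
    destruct (Rlt_or_le 0 d) as [Hpos|Hneg].
    - rewrite Rabs_right in Hdelta by lra. apply Rmult_lt_0_compat; lra.
    - rewrite Rabs_left in Hdelta by (destruct Hneg; [lra| contradiction]).
      assert (d < 0) by (destruct Hneg; [lra| contradiction]). nra. }
  exists e. split; [lra|]. split.
  - pose proof (Hsign (- e) ltac:(lra) ltac:(rewrite Rabs_left; lra)) as Hm.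
    replace (p + - e) with (p - e) in Hm by ring.
    replace (f (p - e) / - e * d) with (- (f (p - e) * d) / e) in Hm by (field; lra).
    assert (0 < - (f (p - e) * d)).
    { apply (Rmult_lt_reg_r (/ e)); [apply Rinv_0_lt_compat; lra|]. lra. }
    lra.
  - pose proof (Hsign e ltac:(lra) ltac:(rewrite Rabs_right; lra)) as Hq.
    replace (f (p + e) / e * d) with (f (p + e) * d / e) in Hq by (field; lra).
    apply (Rmult_lt_reg_r (/ e)); [apply Rinv_0_lt_compat; lra|]. lra.
Qed.

Lemma is_derive_periodic (u : R -> R) x l :
  (forall y, u (y + 1) = u y) -> is_derive u (x + 1) l -> is_derive u x l.
Proof.
  intros Hp Hl. apply (is_derive_ext (fun y => u (y + 1))); [intro; apply Hp|].
  replace l with (1 * l) by ring.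
  apply (is_derive_comp u (fun y => y + 1)); [exact Hl| auto_derive; [exact I| ring]].
Qed.

Lemma Derive_periodic (u : R -> R) x :
  (forall y, u (y + 1) = u y) -> ex_derive u (x + 1) -> Derive u (x + 1) = Derive u x.
Proof.
  intros Hp Hd. symmetry. apply is_derive_unique, is_derive_periodic; [exact Hp|].
  apply Derive_correct, Hd.
Qed.

Lemma Rabs_sign_unit a : a <> 0 -> Rabs (a / Rabs a) = 1 /\ a / Rabs a * a = Rabs a.
Proof.
  intro Ha. destruct (Rlt_or_le 0 a) as [Hp|Hn].
  - rewrite (Rabs_right a) by lra. replace (a / a) with 1 by (field; lra).
    split; [apply Rabs_R1| field; lra].
  - rewrite (Rabs_left a) by (destruct Hn; [lra| contradiction]).
    replace (a / - a) with (- (1)) by (field; exact Ha).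
    split; [rewrite Rabs_Ropp; apply Rabs_R1| ring].
Qed.

Lemma continuous_nonvanishing_sign (f : R -> R) :
  (forall x, continuous f x) -> (forall x, f x <> 0) ->
  (forall x, 0 < f x) \/ (forall x, f x < 0).
Proof.
  intros Hc Hnz.
  assert (Hivt : forall g : R -> R, (forall x, continuous g x) ->
    forall a b, a < b -> g a < 0 -> 0 < g b -> exists z, g z = 0).
  { intros g Hg a b Hab Ha Hb.
    destruct (IVT g a b (fun x => proj2 (continuity_pt_filterlim g x) (Hg x)) Hab Ha Hb)
      as [z [_ Hz]].
    exists z; exact Hz. }
  assert (Hsame : forall a b, f a < 0 -> 0 < f b -> False).
  { intros a b Ha Hb. destruct (Rtotal_order a b) as [Hab|[<-|Hba]]; [| lra |].
    - destruct (Hivt f Hc a b Hab Ha Hb) as [z Hz]. exact (Hnz z Hz).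
    - destruct (Hivt (fun x => - f x) (fun x => continuous_opp f x (Hc x)) b a Hba
        ltac:(lra) ltac:(lra)) as [z Hz].
      apply (Hnz z). lra. }
  destruct (Rtotal_order (f 0) 0) as [Hn|[Hz|Hp]]; [right| exfalso; exact (Hnz 0 Hz)| left];
    intro x; destruct (Rtotal_order (f x) 0) as [Hx|[Hx|Hx]];
    solve [assumption| exfalso; exact (Hnz x Hx)| exfalso; eapply Hsame; eassumption].
Qed.

Lemma ex_RInt_R (f : R -> R) a b : (forall x, continuous f x) -> ex_RInt f a b.
Proof. intro Hc. apply (ex_RInt_continuous (V := R_CompleteNormedModule)). intros; apply Hc. Qed.

Section StrictConvexity.

Variables f df : R -> R.
Hypothesis f_derive : forall x, is_derive f x (df x).
Hypothesis df_incr : forall a b, a < b -> df a < df b.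

Lemma slope_strict_bounds a b : a < b -> df a < (f b - f a) / (b - a) < df b.
Proof.
  assert (Hw : forall a b, a < b -> df a <= (f b - f a) / (b - a) <= df b).
  { intros a' b' Hab.
    destruct (MVT_gen f a' b' df) as [c [Hc Heq]].
    - intros x _; apply f_derive.
    - intros x _. apply continuity_pt_filterlim, (is_derive_continuous_R f x (df x)), f_derive.
    - rewrite Rmin_left, Rmax_right in Hc by lra.
      rewrite Heq. replace (df c * (b' - a') / (b' - a')) with (df c) by (field; lra).
      split; [destruct (Req_dec c a') as [->|]; [lra| left; apply df_incr; lra]|].
      destruct (Req_dec c b') as [->|]; [lra| left; apply df_incr; lra]. }
  intros Hab. set (m := (a + b) / 2).
  pose proof (Hw a m ltac:(unfold m; lra)). pose proof (Hw m b ltac:(unfold m; lra)).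
  pose proof (df_incr a m ltac:(unfold m; lra)). pose proof (df_incr m b ltac:(unfold m; lra)).
  replace ((f b - f a) / (b - a)) with (((f m - f a) / (m - a) + (f b - f m) / (b - m)) / 2)
    by (unfold m; field; lra).
  lra.
Qed.

Lemma slope_incr a b c : a < b -> b < c ->
  (f b - f a) / (b - a) < (f c - f b) / (c - b).
Proof.
  intros H1 H2. pose proof (slope_strict_bounds a b H1). pose proof (slope_strict_bounds b c H2). lra.
Qed.

Lemma neg_between_roots a q b : a < q -> q < b -> f a = 0 -> f b = 0 -> f q < 0.
Proof.
  intros H1 H2 Ha Hb. pose proof (slope_incr a q b H1 H2) as Hs. rewrite Ha, Hb in Hs.
  apply Rnot_le_lt. intro Hq.
  assert (0 <= (f q - 0) / (q - a)) by (apply Rdiv_le_0_compat; lra).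
  assert ((0 - f q) / (b - q) <= 0).
  { replace ((0 - f q) / (b - q)) with (- (f q / (b - q))) by (field; lra).
    assert (0 <= f q / (b - q)) by (apply Rdiv_le_0_compat; lra). lra. }
  lra.
Qed.

Lemma deriv_signs_at_roots a b : a < b -> f a = 0 -> f b = 0 -> df a < 0 < df b.
Proof.
  intros H Ha Hb. pose proof (slope_strict_bounds a b H) as Hs.
  rewrite Ha, Hb in Hs. replace ((0 - 0) / (b - a)) with 0 in Hs by (field; lra). lra.
Qed.

Lemma deriv_neg_at_root_left_of_neg p q : f p = 0 -> f q < 0 -> p <= q -> p < q /\ df p < 0.
Proof.
  intros Hp Hq [Hlt| ->]; [|lra].
  split; [exact Hlt|]. pose proof (slope_strict_bounds p q Hlt) as [H1 _].
  rewrite Hp in H1. assert ((f q - 0) / (q - p) < 0).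
  { unfold Rdiv. apply Rmult_neg_pos; [lra| apply Rinv_0_lt_compat; lra]. }
  lra.
Qed.

End StrictConvexity.

Lemma slope_gt_iff (u : R -> R) a b q : a < b ->
  (q < (u b - u a) / (b - a) <-> u a - q * a < u b - q * b).
Proof.
  intro Hab. split; intro H.
  - assert (E : u b - u a = (u b - u a) / (b - a) * (b - a)) by (field; lra). nra.
  - apply (Rmult_lt_reg_r (b - a)); [lra|].
    replace ((u b - u a) / (b - a) * (b - a)) with (u b - u a) by (field; lra). lra.
Qed.

Lemma slope_lt_iff (u : R -> R) a b q : a < b ->
  ((u b - u a) / (b - a) < q <-> u b - q * b < u a - q * a).
Proof.
  intro Hab. split; intro H.
  - assert (E : u b - u a = (u b - u a) / (b - a) * (b - a)) by (field; lra). nra.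
  - apply (Rmult_lt_reg_r (b - a)); [lra|].
    replace ((u b - u a) / (b - a) * (b - a)) with (u b - u a) by (field; lra). lra.
Qed.

Lemma right_quotient_gt_iff (u : R -> R) x h q : 0 < h ->
  (q < (u (x + h) - u x) / h <-> u x - q * x < u (x + h) - q * (x + h)).
Proof.
  intro Hh. rewrite <- (slope_gt_iff u x (x + h)) by lra. replace (x + h - x) with h by ring. tauto.
Qed.

Lemma right_quotient_lt_iff (u : R -> R) x h q : 0 < h ->
  ((u (x + h) - u x) / h < q <-> u (x + h) - q * (x + h) < u x - q * x).
Proof.
  intro Hh. rewrite <- (slope_lt_iff u x (x + h)) by lra. replace (x + h - x) with h by ring. tauto.
Qed.

Definition strictly_quasiconvex_on (G : R -> R) (al be : R) : Prop :=
  forall a b c, al < a -> a < b -> b < c -> c < be -> G b < Rmax (G a) (G c).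

Lemma strictly_quasiconvex_on_reflect (G : R -> R) al be :
  strictly_quasiconvex_on G al be ->
  strictly_quasiconvex_on (fun y => G (- y)) (- be) (- al).
Proof.
  intros HG a b c H1 H2 H3 H4. rewrite Rmax_comm. apply HG; lra.
Qed.

Lemma strictly_quasiconvex_incr_from (G : R -> R) al be p q :
  strictly_quasiconvex_on G al be -> al < p -> p < q -> G p < G q ->
  forall a b, q <= a -> a < b -> b < be -> G a < G b.
Proof.
  intros HG Hp Hpq Hlt.
  assert (Hq : forall b, q < b -> b < be -> G q < G b).
  { intros b Hqb Hb. pose proof (HG p q b Hp Hpq Hqb Hb) as Hm.
    unfold Rmax in Hm; destruct (Rle_dec (G p) (G b)); lra. }
  intros a b Ha Hab Hb. destruct (Req_dec a q) as [->|Hne]; [apply Hq; lra|].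
  pose proof (Hq a ltac:(lra) ltac:(lra)).
  pose proof (HG q a b ltac:(lra) ltac:(lra) Hab Hb) as Hm.
  unfold Rmax in Hm; destruct (Rle_dec (G q) (G b)); lra.
Qed.

Lemma strictly_quasiconvex_decr_until (G : R -> R) al be p q :
  strictly_quasiconvex_on G al be -> p < q -> q < be -> G q < G p ->
  forall a b, al < a -> a < b -> b <= p -> G b < G a.
Proof.
  intros HG Hpq Hq Hlt a b Ha Hab Hb.
  pose proof (strictly_quasiconvex_incr_from _ _ _ (- q) (- p)
    (strictly_quasiconvex_on_reflect G al be HG) ltac:(lra) ltac:(lra)) as Hinc.
  cbv beta in Hinc. rewrite !Ropp_involutive in Hinc.
  specialize (Hinc Hlt (- b) (- a) ltac:(lra) ltac:(lra) ltac:(lra)).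
  rewrite !Ropp_involutive in Hinc. exact Hinc.
Qed.

Definition lim_right0 (D : R -> R) (l : R) : Prop :=
  forall eps, 0 < eps -> exists d, 0 < d /\ forall h, 0 < h < d -> Rabs (D h - l) < eps.

Definition eventually_right0 (P : R -> Prop) : Prop :=
  exists d, 0 < d /\ forall h, 0 < h < d -> P h.

Definition right_deriv (u : R -> R) (x : R) : R -> Prop :=
  lim_right0 (fun h => (u (x + h) - u x) / h).

Definition left_deriv (u : R -> R) (x : R) : R -> Prop :=
  lim_right0 (fun h => (u x - u (x - h)) / h).

Lemma not_eventually_right0 (P : R -> Prop) :
  ~ eventually_right0 P -> forall d, 0 < d -> exists h, 0 < h < d /\ ~ P h.
Proof.
  intros Hn d Hd. apply NNPP; intro Hc. apply Hn. exists d; split; [exact Hd|].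
  intros h Hh. apply NNPP; intro HP. apply Hc. exists h; auto.
Qed.

Lemma lim_right0_le (D : R -> R) l q :
  lim_right0 D l -> eventually_right0 (fun h => D h <= q) -> l <= q.
Proof.
  intros Hl [d [Hd Hq]]. apply Rnot_lt_le; intro Hlt.
  destruct (Hl ((l - q) / 2) ltac:(lra)) as [d1 [Hd1 H1]].
  set (h := Rmin d d1 / 2).
  assert (0 < h) by (unfold h; pose proof (Rmin_pos _ _ Hd Hd1); lra).
  pose proof (Rmin_l d d1); pose proof (Rmin_r d d1).
  specialize (Hq h ltac:(unfold h in *; lra)). specialize (H1 h ltac:(unfold h in *; lra)).
  apply Rabs_lt_between' in H1. lra.
Qed.

Lemma lim_right0_opp (D : R -> R) l : lim_right0 D l -> lim_right0 (fun h => - D h) (- l).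
Proof.
  intros Hl eps He. destruct (Hl eps He) as [d [Hd H]]. exists d; split; [exact Hd|].
  intros h Hh. replace (- D h - - l) with (- (D h - l)) by ring. rewrite Rabs_Ropp. auto.
Qed.

Lemma lim_right0_ge (D : R -> R) l q :
  lim_right0 D l -> eventually_right0 (fun h => q <= D h) -> q <= l.
Proof.
  intros Hl [d [Hd Hq]].
  enough (- l <= - q) by lra.
  apply (lim_right0_le (fun h => - D h)); [apply lim_right0_opp, Hl|].
  exists d; split; [exact Hd|]. intros h Hh. specialize (Hq h Hh). lra.
Qed.

Lemma is_derive_iff_right_left (u : R -> R) x l :
  is_derive u x l <-> right_deriv u x l /\ left_deriv u x l.
Proof.
  rewrite is_derive_Reals. split.
  - intro H. split; intros eps He; destruct (H eps He) as [d Hd];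
      exists d; split; try apply cond_pos; intros h Hh.
    + apply Hd; [lra| rewrite Rabs_right; lra].
    + specialize (Hd (- h) ltac:(lra) ltac:(rewrite Rabs_left; lra)).
      replace ((u x - u (x - h)) / h) with ((u (x + - h) - u x) / - h)
        by (replace (x + - h) with (x - h) by ring; field; lra).
      exact Hd.
  - intros [HR HL] eps He.
    destruct (HR eps He) as [d1 [Hd1 H1]]. destruct (HL eps He) as [d2 [Hd2 H2]].
    exists (mkposreal _ (Rmin_pos _ _ Hd1 Hd2)). simpl. intros h Hh0 Hh.
    pose proof (Rmin_l d1 d2); pose proof (Rmin_r d1 d2).
    destruct (Rtotal_order h 0) as [Hn|[He0|Hp]]; [| contradiction |].
    + rewrite Rabs_left in Hh by lra. specialize (H2 (- h) ltac:(lra)).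
      replace ((u x - u (x - - h)) / - h) with ((u (x + h) - u x) / h) in H2
        by (replace (x - - h) with (x + h) by ring; field; lra).
      exact H2.
    + rewrite Rabs_right in Hh by lra. apply H1. lra.
Qed.

Lemma left_deriv_of_reflect (u : R -> R) x l :
  right_deriv (fun y => u (- y)) (- x) (- l) -> left_deriv u x l.
Proof.
  intros H eps He. destruct (H eps He) as [d [Hd Hh]]. exists d; split; [exact Hd|].
  intros h Hr. specialize (Hh h Hr). simpl in Hh.
  replace (- (- x + h)) with (x - h) in Hh by ring. rewrite Ropp_involutive in Hh.
  replace ((u (x - h) - u x) / h - - l) with (- ((u x - u (x - h)) / h - l)) in Hh
    by (field; lra).
  rewrite Rabs_Ropp in Hh. exact Hh.
Qed.

Lemma right_deriv_opp (u : R -> R) x r :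
  right_deriv u x r -> right_deriv (fun y => - u y) x (- r).
Proof.
  intros H eps He. destruct (H eps He) as [d [Hd Hh]]. exists d; split; [exact Hd|].
  intros h Hr. specialize (Hh h Hr).
  replace ((- u (x + h) - - u x) / h - - r) with (- ((u (x + h) - u x) / h - r)) by (field; lra).
  rewrite Rabs_Ropp. exact Hh.
Qed.

Lemma Darboux_incr (u : R -> R) a b c : (forall x, ex_derive u x) -> a < b ->
  Derive u a < c < Derive u b -> exists t, a < t < b /\ Derive u t = c.
Proof.
  intros Hd Hab [Hca Hcb].
  set (g := fun y => u y - c * y).
  assert (Hgc : forall x, continuous g x).
  { intro x. apply (continuous_minus u (fun y => c * y));
      apply ex_derive_continuous_R; [apply Hd| auto_derive; exact I]. }
  destruct (continuous_min_on g a b ltac:(lra) Hgc) as [m [Hm Hmin]].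
  assert (Hder : forall x, right_deriv u x (Derive u x) /\ left_deriv u x (Derive u x))
    by (intro x; apply is_derive_iff_right_left, Derive_correct, Hd).
  assert (Hsmall : forall d, 0 < d -> exists h, 0 < h < d /\ h <= b - a).
  { intros d Hd0. exists (Rmin (d / 2) (b - a)).
    pose proof (Rmin_l (d / 2) (b - a)); pose proof (Rmin_r (d / 2) (b - a)).
    pose proof (Rmin_pos (d / 2) (b - a) ltac:(lra) ltac:(lra)). lra. }
  assert (Hma : m <> a).
  { intros ->. destruct (proj1 (Hder a) (c - Derive u a) ltac:(lra)) as [d [Hd0 H]].
    destruct (Hsmall d Hd0) as [h [Hh Hhb]].
    specialize (H h Hh). apply Rabs_lt_between' in H.
    assert (Hl : (u (a + h) - u a) / h < c) by lra.
    apply right_quotient_lt_iff in Hl; [|lra].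
    specialize (Hmin (a + h) ltac:(lra)). unfold g in Hmin. lra. }
  assert (Hmb : m <> b).
  { intros ->. destruct (proj2 (Hder b) (Derive u b - c) ltac:(lra)) as [d [Hd0 H]].
    destruct (Hsmall d Hd0) as [h [Hh Hhb]].
    specialize (H h Hh). apply Rabs_lt_between' in H.
    assert (Hl : c < (u b - u (b - h)) / (b - (b - h))) by (replace (b - (b - h)) with h by ring; lra).
    apply slope_gt_iff in Hl; [|lra].
    specialize (Hmin (b - h) ltac:(lra)). unfold g in Hmin. lra. }
  assert (Hmi : a < m < b) by (destruct Hm as [[?|?] [?|?]]; subst; try contradiction; lra).
  exists m; split; [exact Hmi|]. apply Rle_antisym.
  - apply (lim_right0_le _ _ c (proj2 (Hder m))). exists (m - a); split; [lra|].
    intros h Hh. specialize (Hmin (m - h) ltac:(lra)). unfold g in Hmin.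
    apply (Rmult_le_reg_r h); [lra|].
    replace ((u m - u (m - h)) / h * h) with (u m - u (m - h)) by (field; lra). lra.
  - apply (lim_right0_ge _ _ c (proj1 (Hder m))). exists (b - m); split; [lra|].
    intros h Hh. specialize (Hmin (m + h) ltac:(lra)). unfold g in Hmin.
    apply (Rmult_le_reg_r h); [lra|].
    replace ((u (m + h) - u m) / h * h) with (u (m + h) - u m) by (field; lra). lra.
Qed.

Lemma Darboux (u : R -> R) a b c : (forall x, ex_derive u x) -> a < b ->
  (Derive u a < c < Derive u b \/ Derive u b < c < Derive u a) ->
  exists t, a < t < b /\ Derive u t = c.
Proof.
  intros Hd Hab [H|H]; [apply Darboux_incr; assumption|].
  destruct (Darboux_incr (fun y => - u y) a b (- c)) as [t [Ht Htc]];
    [intro x; apply (ex_derive_opp (V := R_NormedModule) u), Hd| exact Hab| rewrite !Derive_opp; lra|].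
  exists t; split; [exact Ht|]. rewrite Derive_opp in Htc. lra.
Qed.

(** * Viscosity sub- and supersolutions in one variable *)

Definition continuous2_at (K : R -> R -> R) (y q : R) : Prop :=
  forall eps, 0 < eps -> exists d, 0 < d /\ forall y' q',
    Rabs (y' - y) < d -> Rabs (q' - q) < d -> Rabs (K y' q' - K y q) < eps.

Lemma continuous2_at_opp (K : R -> R -> R) y q :
  continuous2_at K y q -> continuous2_at (fun y q => - K y q) y q.
Proof.
  intros HK eps He. destruct (HK eps He) as [d [Hd H]]. exists d; split; [exact Hd|].
  intros y' q' H1 H2. replace (- K y' q' - - K y q) with (- (K y' q' - K y q)) by ring.
  rewrite Rabs_Ropp. auto.
Qed.

Lemma continuous2_at_comp_oppr (K : R -> R -> R) y q :
  continuous2_at K y (- q) -> continuous2_at (fun y q => K y (- q)) y q.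
Proof.
  intros HK eps He. destruct (HK eps He) as [d [Hd H]]. exists d; split; [exact Hd|].
  intros y' q' H1 H2. apply H; [exact H1|].
  replace (- q' - - q) with (- (q' - q)) by ring. rewrite Rabs_Ropp. exact H2.
Qed.

Lemma continuous2_at_comp_opp (K : R -> R -> R) y q :
  continuous2_at K (- y) (- q) -> continuous2_at (fun y q => K (- y) (- q)) y q.
Proof.
  intros HK eps He. destruct (HK eps He) as [d [Hd H]]. exists d; split; [exact Hd|].
  intros y' q' H1 H2. apply H;
    [replace (- y' - - y) with (- (y' - y)) by ring| replace (- q' - - q) with (- (q' - q)) by ring];
    rewrite Rabs_Ropp; assumption.
Qed.

Lemma continuous2_at_pos_near (K : R -> R -> R) y q :
  continuous2_at K y q -> 0 < K y q ->
  exists d, 0 < d /\ forall y', Rabs (y' - y) < d -> 0 < K y' q.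
Proof.
  intros HK Hp. destruct (HK (K y q) Hp) as [d [Hd H]].
  exists d; split; [exact Hd|]. intros y' Hy.
  specialize (H y' q Hy ltac:(rewrite Rminus_eq_0, Rabs_R0; lra)).
  apply Rabs_lt_between' in H. lra.
Qed.

Lemma continuous2_at_neg_near (K : R -> R -> R) y q :
  continuous2_at K y q -> K y q < 0 ->
  exists d, 0 < d /\ forall y', Rabs (y' - y) < d -> K y' q < 0.
Proof.
  intros HK Hn.
  destruct (continuous2_at_pos_near (fun y q => - K y q) y q (continuous2_at_opp K y q HK))
    as [d [Hd H]]; [lra|].
  exists d; split; [exact Hd|]. intros y' Hy. specialize (H y' Hy). lra.
Qed.

Section Coercivity.

Variables K Kd : R -> R -> R.
Hypothesis K_derive : forall y q, is_derive (K y) q (Kd y q).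
Hypothesis Kd_incr : forall y a b, a < b -> Kd y a < Kd y b.
Hypothesis K_continuous : forall y q, continuous2_at K y q.

Lemma coercive_right_of_superlinear x0 :
  (forall M, exists R0, forall q, R0 <= Rabs q -> M * Rabs q <= K x0 q) ->
  exists d P, 0 < d /\ forall y q, Rabs (y - x0) < d -> P <= q -> 0 < K y q.
Proof.
  intro Hsup.
  destruct (Hsup 1) as [R1 H1].
  set (A := Rabs R1 + 1).
  assert (HA : 1 <= A /\ 1 <= K x0 A).
  { pose proof (Rabs_pos R1); pose proof (Rle_abs R1).
    specialize (H1 A ltac:(unfold A; rewrite Rabs_right; lra)).
    unfold A in *. rewrite Rabs_right in H1; lra. }
  destruct (Hsup (K x0 A + 1)) as [R2 H2].
  set (B := Rabs R2 + A + 1).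
  assert (HB : A < B /\ K x0 A + 1 <= K x0 B).
  { pose proof (Rabs_pos R2); pose proof (Rle_abs R2).
    specialize (H2 B ltac:(unfold B; rewrite Rabs_right; lra)).
    rewrite Rabs_right in H2 by (unfold B; lra). split; [unfold B; lra|].
    assert (1 <= B) by (unfold B; lra). nra. }
  destruct (K_continuous x0 A (1 / 2) ltac:(lra)) as [dA [HdA HcA]].
  destruct (K_continuous x0 B (1 / 2) ltac:(lra)) as [dB [HdB HcB]].
  exists (Rmin dA dB), B. split; [apply Rmin_pos; assumption|].
  intros y q Hy Hq.
  pose proof (Rmin_l dA dB); pose proof (Rmin_r dA dB).
  specialize (HcA y A ltac:(lra) ltac:(rewrite Rminus_eq_0, Rabs_R0; lra)).
  specialize (HcB y B ltac:(lra) ltac:(rewrite Rminus_eq_0, Rabs_R0; lra)).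
  apply Rabs_lt_between' in HcA. apply Rabs_lt_between' in HcB.
  destruct Hq as [Hlt| <-]; [|lra].
  pose proof (slope_incr (K y) (Kd y) (K_derive y) (Kd_incr y) A B q ltac:(lra) Hlt) as Hs.
  assert (0 < (K y B - K y A) / (B - A)) by (apply Rdiv_lt_0_compat; lra).
  assert (Hq : 0 < (K y q - K y B) / (q - B)) by lra.
  assert (0 < K y q - K y B).
  { replace (K y q - K y B) with ((K y q - K y B) / (q - B) * (q - B)) by (field; lra).
    apply Rmult_lt_0_compat; lra. }
  lra.
Qed.

End Coercivity.

Lemma coercive_of_superlinear (K Kd : R -> R -> R) x0 :
  (forall y q, is_derive (K y) q (Kd y q)) -> (forall y a b, a < b -> Kd y a < Kd y b) ->
  (forall y q, continuous2_at K y q) ->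
  (forall M, exists R0, forall q, R0 <= Rabs q -> M * Rabs q <= K x0 q) ->
  exists d P, 0 < d /\ forall y q, Rabs (y - x0) < d -> P <= Rabs q -> 0 < K y q.
Proof.
  intros HKd Hinc Hc Hsup.
  destruct (coercive_right_of_superlinear K Kd HKd Hinc Hc x0 Hsup) as [d1 [P1 [Hd1 H1]]].
  destruct (coercive_right_of_superlinear (fun y q => K y (- q)) (fun y q => - Kd y (- q)))
    with (x0 := x0) as [d2 [P2 [Hd2 H2]]].
  - intros y q. cbv beta. replace (- Kd y (- q)) with (- (1) * Kd y (- q)) by ring.
    apply (is_derive_comp (K y) (fun q => - q)); [apply HKd| auto_derive; [exact I| ring]].
  - intros y a b Hab. pose proof (Hinc y (- b) (- a) ltac:(lra)). lra.
  - intros y q. apply continuous2_at_comp_oppr, Hc.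
  - intro M. destruct (Hsup M) as [R0 HR0]. exists R0. intros q Hq.
    rewrite <- Rabs_Ropp. apply HR0. rewrite Rabs_Ropp. exact Hq.
  - exists (Rmin d1 d2), (Rmax P1 P2). split; [apply Rmin_pos; assumption|].
    intros y q Hy Hq.
    pose proof (Rmin_l d1 d2); pose proof (Rmin_r d1 d2).
    pose proof (Rmax_l P1 P2); pose proof (Rmax_r P1 P2).
    destruct (Rle_or_lt 0 q) as [Hq0|Hq0].
    + rewrite Rabs_right in Hq by lra. apply H1; lra.
    + rewrite Rabs_left in Hq by lra. rewrite <- (Ropp_involutive q). apply H2; lra.
Qed.

Definition parabola (q k c y : R) : R := q * y + k * (y - c) ^ 2.

Lemma is_derive_parabola q k c y : is_derive (parabola q k c) y (q + 2 * k * (y - c)).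
Proof. unfold parabola. auto_derive; [exact I| ring]. Qed.

Lemma Derive_parabola q k c y : Derive (parabola q k c) y = q + 2 * k * (y - c).
Proof. apply is_derive_unique, is_derive_parabola. Qed.

Lemma C1_parabola q k c : C1 (parabola q k c).
Proof.
  split; intro x; [eexists; apply is_derive_parabola|].
  apply (continuous_ext (fun y => q + 2 * k * (y - c))).
  - intro y. symmetry. apply Derive_parabola.
  - apply ex_derive_continuous_R. auto_derive; exact I.
Qed.

Lemma C1_opp (phi : R -> R) : C1 phi -> C1 (fun y => - phi y).
Proof.
  intros [Hd Hc]. split; intro x.
  - apply (ex_derive_opp (V := R_NormedModule) phi), Hd.
  - apply (continuous_ext (fun y => - Derive phi y)); [intro y; symmetry; apply Derive_opp|].
    apply (continuous_opp (Derive phi)), Hc.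
Qed.

Lemma subsolution_parabola_test (K : R -> R -> R) u q k c a b m :
  viscosity_subsolution (fun y p _ => K y p) u -> a < m < b ->
  (forall y, a <= y <= b -> u y - parabola q k c y <= u m - parabola q k c m) ->
  K m (q + 2 * k * (m - c)) <= 0.
Proof.
  intros Hsub Hm H. rewrite <- Derive_parabola.
  apply (Hsub (parabola q k c) m (C1_parabola q k c)).
  apply (local_max_at_of_interval _ a b m Hm H).
Qed.

Lemma supersolution_parabola_test (K : R -> R -> R) u q k c a b m :
  viscosity_supersolution (fun y p _ => K y p) u -> a < m < b ->
  (forall y, a <= y <= b -> u m - parabola q k c m <= u y - parabola q k c y) ->
  0 <= K m (q + 2 * k * (m - c)).
Proof.
  intros Hsup Hm H. rewrite <- Derive_parabola.
  apply (Hsup (parabola q k c) m (C1_parabola q k c)).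
  apply (local_min_at_of_interval _ a b m Hm H).
Qed.

Lemma subsolution_of_opp_supersolution (K : R -> R -> R) u :
  viscosity_supersolution (fun y p _ => K y p) u ->
  viscosity_subsolution (fun y p _ => - K y (- p)) (fun y => - u y).
Proof.
  intros Hsup phi x Hphi [d [Hd Hm]]. cbv beta.
  enough (0 <= K x (- Derive phi x)) by lra.
  rewrite <- Derive_opp. apply (Hsup (fun y => - phi y) x (C1_opp phi Hphi)).
  exists d; split; [exact Hd|]. intros y Hy. specialize (Hm y Hy). cbv beta in *. lra.
Qed.

Lemma supersolution_of_opp_subsolution (K : R -> R -> R) u :
  viscosity_subsolution (fun y p _ => K y p) u ->
  viscosity_supersolution (fun y p _ => - K y (- p)) (fun y => - u y).
Proof.
  intros Hsub phi x Hphi [d [Hd Hm]]. cbv beta.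
  enough (K x (- Derive phi x) <= 0) by lra.
  rewrite <- Derive_opp. apply (Hsub (fun y => - phi y) x (C1_opp phi Hphi)).
  exists d; split; [exact Hd|]. intros y Hy. specialize (Hm y Hy). cbv beta in *. lra.
Qed.

Lemma subsolution_quasiconvex (K : R -> R -> R) u q al be :
  viscosity_subsolution (fun y p _ => K y p) u -> (forall y, continuous u y) ->
  (forall y, al < y < be -> 0 < K y q) ->
  strictly_quasiconvex_on (fun y => u y - q * y) al be.
Proof.
  intros Hsub Hu Hpos a b c H1 H2 H3 H4.
  set (G := fun y => u y - q * y).
  apply Rnot_le_lt; intro Hge. change (Rmax (G a) (G c) <= G b) in Hge.
  pose proof (Rmax_l (G a) (G c)); pose proof (Rmax_r (G a) (G c)).
  assert (HGc : forall y, continuous G y).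
  { intro y. apply (continuous_minus u (fun y => q * y)); [apply Hu|].
    apply ex_derive_continuous_R. auto_derive; exact I. }
  destruct (continuous_max_on G a c ltac:(lra) HGc) as [m [Hm Hmax]].
  assert (Hint : exists m', a < m' < c /\ forall y, a <= y <= c -> G y <= G m').
  { destruct (Rle_or_lt (G m) (G b)) as [Hb|Hb].
    - exists b; split; [lra|]. intros y Hy. specialize (Hmax y Hy). lra.
    - exists m; split; [|exact Hmax].
      destruct Hm as [[Hma| <-] [Hmc| ->]]; lra. }
  destruct Hint as [m' [Hm' Hmax']].
  assert (HK : K m' (q + 2 * 0 * (m' - 0)) <= 0).
  { apply (subsolution_parabola_test K u q 0 0 a c m' Hsub Hm').
    intros y Hy. specialize (Hmax' y Hy). unfold G, parabola in *. lra. }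
  replace (q + 2 * 0 * (m' - 0)) with q in HK by ring.
  specialize (Hpos m' ltac:(lra)). lra.
Qed.

Lemma supersolution_quasiconcave (K : R -> R -> R) u q al be :
  viscosity_supersolution (fun y p _ => K y p) u -> (forall y, continuous u y) ->
  (forall y, al < y < be -> K y q < 0) ->
  strictly_quasiconvex_on (fun y => - (u y - q * y)) al be.
Proof.
  intros Hsup Hu Hneg a b c H1 H2 H3 H4.
  pose proof (subsolution_quasiconvex (fun y p => - K y (- p)) (fun y => - u y) (- q) al be
    (subsolution_of_opp_supersolution K u Hsup)
    (fun y => continuous_opp u y (Hu y))) as Hsqc.
  specialize (Hsqc ltac:(intros y Hy; cbv beta; rewrite Ropp_involutive; specialize (Hneg y Hy); lra)
    a b c H1 H2 H3 H4).
  cbv beta in *.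
  replace (- (u b - q * b)) with (- u b - - q * b) by ring.
  replace (- (u a - q * a)) with (- u a - - q * a) by ring.
  replace (- (u c - q * c)) with (- u c - - q * c) by ring.
  exact Hsqc.
Qed.

Lemma right_quotient_bounds (v : R -> R) x r e h : 0 < h ->
  Rabs ((v (x + h) - v x) / h - r) < e ->
  v x + (r - e) * h < v (x + h) < v x + (r + e) * h.
Proof.
  intros Hh H. apply Rabs_lt_between' in H.
  replace (v (x + h)) with (v x + (v (x + h) - v x) / h * h) by (field; lra).
  split; apply Rplus_lt_compat_l, Rmult_lt_compat_r; lra.
Qed.

(* At the ends of [[x, x + h]] the parabola lies [2 e h] below the line [r y] and
   at its vertex it touches it, while [v] stays within [e h] of [v x + r (y - x)];
   so [v - P] is smaller at the vertex than at both ends. *)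
Lemma parabola_interior_min (v : R -> R) x r e h : 0 < e -> 0 < h ->
  (forall y, continuous v y) ->
  Rabs ((v (x + h) - v x) / h - r) < e ->
  Rabs ((v (x + h / 2) - v x) / (h / 2) - r) < e ->
  let P := parabola r (- (8 * e / h)) (x + h / 2) in
  exists m, x < m < x + h /\
    Rabs (2 * (- (8 * e / h)) * (m - (x + h / 2))) <= 8 * e /\
    forall y, x <= y <= x + h -> v m - P m <= v y - P y.
Proof.
  intros He Hh Hv B1 B2 P.
  apply right_quotient_bounds in B1; [|lra]. apply right_quotient_bounds in B2; [|lra].
  assert (HGc : forall y, continuous (fun y => v y - P y) y).
  { intro y. apply (continuous_minus v P); [apply Hv|].
    apply ex_derive_continuous_R. eexists; apply is_derive_parabola. }
  destruct (continuous_min_on _ x (x + h) ltac:(lra) HGc) as [m [Hm Hmin]].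
  cbv beta in Hmin.
  assert (Px : P x = r * x - 2 * e * h) by (unfold P, parabola; field; lra).
  assert (Pc : P (x + h / 2) = r * x + r * (h / 2)) by (unfold P, parabola; field; lra).
  assert (Ph : P (x + h) = r * x + r * h - 2 * e * h) by (unfold P, parabola; field; lra).
  assert (Hc0 : v (x + h / 2) - P (x + h / 2) < v x - P x) by nra.
  assert (Hc1 : v (x + h / 2) - P (x + h / 2) < v (x + h) - P (x + h)) by nra.
  exists m. split; [|split; [|exact Hmin]].
  - specialize (Hmin (x + h / 2) ltac:(lra)).
    destruct Hm as [[Hm1| <-] [Hm2| ->]]; lra.
  - rewrite !Rabs_mult, Rabs_Ropp, (Rabs_right 2), (Rabs_right (8 * e / h)) by
      (try apply Rle_ge, Rdiv_le_0_compat; lra).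
    assert (Rabs (m - (x + h / 2)) <= h / 2) by (apply Rabs_le_between'; lra).
    apply Rle_trans with (2 * (8 * e / h) * (h / 2)); [|right; field; lra].
    apply Rmult_le_compat_l; [|assumption].
    assert (0 <= 8 * e / h) by (apply Rdiv_le_0_compat; lra). lra.
Qed.

Lemma supersolution_right_deriv (G : R -> R -> R) v x r :
  viscosity_supersolution (fun y p _ => G y p) v -> (forall y, continuous v y) ->
  continuous2_at G x r -> right_deriv v x r -> 0 <= G x r.
Proof.
  intros Hsup Hv HG Hr. apply Rnot_lt_le; intro Hneg.
  destruct (HG (- G x r) ltac:(lra)) as [d0 [Hd0 Hc]].
  set (e := d0 / 16).
  destruct (Hr e ltac:(unfold e; lra)) as [d1 [Hd1 HD]].
  set (h := Rmin d1 d0 / 2).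
  assert (Hh : 0 < h < d1 /\ h < d0).
  { unfold h. pose proof (Rmin_pos d1 d0 Hd1 Hd0); pose proof (Rmin_l d1 d0);
    pose proof (Rmin_r d1 d0). lra. }
  destruct (parabola_interior_min v x r e h ltac:(unfold e; lra) ltac:(lra) Hv
    (HD h ltac:(lra)) (HD (h / 2) ltac:(lra))) as [m [Hm [Hslope Hmin]]].
  pose proof (supersolution_parabola_test G v r _ _ x (x + h) m Hsup Hm Hmin) as HGm.
  assert (8 * e < d0) by (unfold e; lra).
  specialize (Hc m (r + 2 * - (8 * e / h) * (m - (x + h / 2)))
    ltac:(apply Rabs_lt_between'; lra)
    ltac:(replace (r + 2 * - (8 * e / h) * (m - (x + h / 2)) - r)
            with (2 * - (8 * e / h) * (m - (x + h / 2))) by ring; lra)).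
  apply Rabs_lt_between' in Hc. lra.
Qed.

(** * Strictly convex equations [K(x, u'(x)) = 0] *)

Record convex_visc_solution (u : R -> R) (K Kd : R -> R -> R) : Prop := {
  cvs_continuous : forall x, continuous u x;
  cvs_sub : viscosity_subsolution (fun y p _ => K y p) u;
  cvs_super : viscosity_supersolution (fun y p _ => K y p) u;
  cvs_K_continuous : forall y q, continuous2_at K y q;
  cvs_Kd_continuous : forall y q, continuous2_at Kd y q;
  cvs_K_derive : forall y q, is_derive (K y) q (Kd y q);
  cvs_Kd_incr : forall y a b, a < b -> Kd y a < Kd y b;
  cvs_superlinear : forall x M, exists R0, forall q, R0 <= Rabs q -> M * Rabs q <= K x q
}.

Section RightDerivative.

Variables (u : R -> R) (K Kd : R -> R -> R).
Hypothesis S : convex_visc_solution u K Kd.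

Lemma cvs_coercive x :
  exists d P, 0 < d /\ forall y q, Rabs (y - x) < d -> P <= Rabs q -> 0 < K y q.
Proof.
  apply (coercive_of_superlinear K Kd x (cvs_K_derive _ _ _ S) (cvs_Kd_incr _ _ _ S)
    (cvs_K_continuous _ _ _ S) (cvs_superlinear _ _ _ S x)).
Qed.

Lemma cvs_root_of_oscillation x q :
  (forall d, 0 < d -> exists h, 0 < h < d /\ q < (u (x + h) - u x) / h) ->
  (forall d, 0 < d -> exists h, 0 < h < d /\ (u (x + h) - u x) / h < q) ->
  K x q = 0.
Proof.
  intros Hup Hdn.
  destruct (Rtotal_order (K x q) 0) as [Hn|[He|Hp]]; [exfalso| exact He| exfalso].
  - destruct (continuous2_at_neg_near K x q (cvs_K_continuous _ _ _ S x q) Hn) as [d [Hd Hnear]].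
    pose proof (supersolution_quasiconcave K u q (x - d) (x + d) (cvs_super _ _ _ S)
      (cvs_continuous _ _ _ S) ltac:(intros y Hy; apply Hnear, Rabs_lt_between'; lra)) as Hsqc.
    destruct (Hup d Hd) as [h2 [Hh2 Hq2]].
    destruct (Hdn h2 ltac:(lra)) as [h1 [Hh1 Hq1]].
    apply right_quotient_gt_iff in Hq2; [|lra]. apply right_quotient_lt_iff in Hq1; [|lra].
    pose proof (Hsqc x (x + h1) (x + h2) ltac:(lra) ltac:(lra) ltac:(lra) ltac:(lra)) as Hm.
    unfold Rmax in Hm. destruct Rle_dec in Hm; lra.
  - destruct (continuous2_at_pos_near K x q (cvs_K_continuous _ _ _ S x q) Hp) as [d [Hd Hnear]].
    pose proof (subsolution_quasiconvex K u q (x - d) (x + d) (cvs_sub _ _ _ S)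
      (cvs_continuous _ _ _ S) ltac:(intros y Hy; apply Hnear, Rabs_lt_between'; lra)) as Hsqc.
    destruct (Hdn d Hd) as [h2 [Hh2 Hq2]].
    destruct (Hup h2 ltac:(lra)) as [h1 [Hh1 Hq1]].
    apply right_quotient_lt_iff in Hq2; [|lra]. apply right_quotient_gt_iff in Hq1; [|lra].
    pose proof (Hsqc x (x + h1) (x + h2) ltac:(lra) ltac:(lra) ltac:(lra) ltac:(lra)) as Hm.
    unfold Rmax in Hm. destruct Rle_dec in Hm; lra.
Qed.

Lemma cvs_right_quotient_upper x :
  exists M d, 0 < d /\ forall h, 0 < h < d -> (u (x + h) - u x) / h <= M.
Proof.
  destruct (cvs_coercive x) as [d [P [Hd HP]]].
  destruct (continuous_bounded_on u (x - d) (x + d) ltac:(lra) (cvs_continuous _ _ _ S))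
    as [Mu [HMu0 HMu]].
  set (q := Rabs P + 8 * Mu / d + 1).
  assert (Hq : Rabs P + 1 <= q)
    by (unfold q; assert (0 <= 8 * Mu / d) by (apply Rdiv_le_0_compat; lra); lra).
  exists q, (d / 4). split; [lra|]. intros h Hh. apply Rnot_lt_le; intro Hlt.
  pose proof (subsolution_quasiconvex K u q (x - d) (x + d) (cvs_sub _ _ _ S) (cvs_continuous _ _ _ S)
    ltac:(intros y Hy; apply HP; [apply Rabs_lt_between'; lra|
      pose proof (Rle_abs P); pose proof (Rabs_pos P); rewrite Rabs_right; lra])) as Hsqc.
  apply right_quotient_gt_iff in Hlt; [|lra].
  pose proof (strictly_quasiconvex_incr_from _ _ _ x (x + h) Hsqc ltac:(lra) ltac:(lra) Hlt
    (x + h) (x + d / 2) ltac:(lra) ltac:(lra) ltac:(lra)) as Hinc.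
  cbv beta in Hinc.
  pose proof (HMu (x + h) ltac:(lra)) as Bh. pose proof (HMu (x + d / 2) ltac:(lra)) as Bd.
  apply Rabs_le_between in Bh. apply Rabs_le_between in Bd.
  assert (E : q * (d / 4) = (Rabs P + 1) * (d / 4) + 2 * Mu) by (unfold q; field; lra).
  assert (0 < (Rabs P + 1) * (d / 4)) by (pose proof (Rabs_pos P); apply Rmult_lt_0_compat; lra).
  assert (q * (d / 4) <= q * (d / 2 - h)) by (pose proof (Rabs_pos P); apply Rmult_le_compat_l; lra).
  lra.
Qed.

Lemma cvs_right_quotient_lower x :
  exists m d, 0 < d /\ forall h, 0 < h < d -> m <= (u (x + h) - u x) / h.
Proof.
  destruct (cvs_coercive x) as [d [P [Hd HP]]].
  destruct (continuous_bounded_on u (x - d) (x + d) ltac:(lra) (cvs_continuous _ _ _ S))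
    as [Mu [HMu0 HMu]].
  set (q := - (Rabs P + 4 * Mu / d + 1)).
  assert (Hq : q <= - (Rabs P + 1))
    by (unfold q; assert (0 <= 4 * Mu / d) by (apply Rdiv_le_0_compat; lra); lra).
  exists q, d. split; [lra|]. intros h Hh. apply Rnot_lt_le; intro Hlt.
  pose proof (subsolution_quasiconvex K u q (x - d) (x + d) (cvs_sub _ _ _ S) (cvs_continuous _ _ _ S)
    ltac:(intros y Hy; apply HP; [apply Rabs_lt_between'; lra|
      pose proof (Rle_abs P); pose proof (Rabs_pos P); rewrite Rabs_left; lra])) as Hsqc.
  apply right_quotient_lt_iff in Hlt; [|lra].
  pose proof (strictly_quasiconvex_decr_until _ _ _ x (x + h) Hsqc ltac:(lra) ltac:(lra) Hlt
    (x - d / 2) x ltac:(lra) ltac:(lra) ltac:(lra)) as Hdec.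
  cbv beta in Hdec.
  pose proof (HMu x ltac:(lra)) as Bx. pose proof (HMu (x - d / 2) ltac:(lra)) as Bd.
  apply Rabs_le_between in Bx. apply Rabs_le_between in Bd.
  assert (E : - q * (d / 2) = (Rabs P + 1) * (d / 2) + 2 * Mu) by (unfold q; field; lra).
  assert (0 < (Rabs P + 1) * (d / 2)) by (pose proof (Rabs_pos P); apply Rmult_lt_0_compat; lra).
  lra.
Qed.

Lemma cvs_right_deriv_exists x : exists r, right_deriv u x r.
Proof.
  destruct (cvs_right_quotient_upper x) as [M [dM [HdM HM]]].
  destruct (cvs_right_quotient_lower x) as [m [dm [Hdm Hm]]].
  set (D := fun h => (u (x + h) - u x) / h).
  set (A := fun q => eventually_right0 (fun h => q <= D h)).
  assert (HbA : bound A).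
  { exists M. intros q [d [Hd Hq]].
    set (h := Rmin (d / 2) (dM / 2)).
    assert (0 < h < d /\ h < dM).
    { unfold h. pose proof (Rmin_l (d / 2) (dM / 2)); pose proof (Rmin_r (d / 2) (dM / 2)).
      pose proof (Rmin_pos (d / 2) (dM / 2) ltac:(lra) ltac:(lra)). lra. }
    specialize (Hq h ltac:(lra)). specialize (HM h ltac:(lra)). unfold D in Hq. lra. }
  destruct (completeness A HbA (ex_intro _ m (ex_intro _ dm (conj Hdm Hm)))) as [r [Hub Hlub]].
  exists r. intros eps Heps.
  assert (Hlo : eventually_right0 (fun h => r - eps / 2 <= D h)).
  { apply NNPP; intro Hn.
    enough (r <= r - eps / 2) by lra. apply Hlub. intros q [d [Hd Hq]].
    apply Rnot_lt_le; intro Hlt. apply Hn.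
    exists d; split; [exact Hd|]. intros h Hh. specialize (Hq h Hh). lra. }
  assert (Hhi : eventually_right0 (fun h => D h <= r + eps / 2)).
  { apply NNPP; intro Hn.
    assert (Hroot : forall q, r < q < r + eps / 2 -> K x q = 0).
    { intros q Hq. apply cvs_root_of_oscillation.
      - intros d Hd. destruct (not_eventually_right0 _ Hn d Hd) as [h [Hh Hq']].
        exists h; split; [exact Hh|]. unfold D in Hq'. lra.
      - assert (HnA : ~ A q) by (intro HA; specialize (Hub q HA); lra).
        intros d Hd. destruct (not_eventually_right0 _ HnA d Hd) as [h [Hh Hq']].
        exists h; split; [exact Hh|]. unfold D in Hq'. lra. }
    pose proof (neg_between_roots (K x) (Kd x) (cvs_K_derive _ _ _ S x) (cvs_Kd_incr _ _ _ S x)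
      (r + eps / 8) (r + eps / 4) (r + 3 * eps / 8) ltac:(lra) ltac:(lra)
      (Hroot (r + eps / 8) ltac:(lra)) (Hroot (r + 3 * eps / 8) ltac:(lra))).
    rewrite (Hroot (r + eps / 4)) in *; lra. }
  destruct Hlo as [d1 [Hd1 H1]]. destruct Hhi as [d2 [Hd2 H2]].
  exists (Rmin d1 d2); split; [apply Rmin_pos; assumption|].
  intros h Hh. pose proof (Rmin_l d1 d2); pose proof (Rmin_r d1 d2).
  specialize (H1 h ltac:(lra)). specialize (H2 h ltac:(lra)). unfold D in *.
  apply Rabs_lt_between'; lra.
Qed.

Lemma cvs_right_deriv_root x r : right_deriv u x r -> K x r = 0.
Proof.
  intro Hr. apply Rle_antisym.
  - enough (0 <= - K x (- - r)) by (rewrite Ropp_involutive in *; lra).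
    apply (supersolution_right_deriv (fun y p => - K y (- p)) (fun y => - u y)).
    + apply supersolution_of_opp_subsolution, (cvs_sub _ _ _ S).
    + intro y. apply (continuous_opp u), (cvs_continuous _ _ _ S).
    + apply (continuous2_at_opp (fun y p => K y (- p))), continuous2_at_comp_oppr.
      rewrite Ropp_involutive. apply (cvs_K_continuous _ _ _ S).
    + apply right_deriv_opp, Hr.
  - apply (supersolution_right_deriv K u x r (cvs_super _ _ _ S) (cvs_continuous _ _ _ S)
      (cvs_K_continuous _ _ _ S x r) Hr).
Qed.

End RightDerivative.

Lemma Derive_reflect (phi : R -> R) x :
  ex_derive phi (- x) -> Derive (fun y => phi (- y)) x = - Derive phi (- x).
Proof.
  intro H. apply is_derive_unique.
  replace (- Derive phi (- x)) with (- (1) * Derive phi (- x)) by ring.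
  apply (is_derive_comp phi (fun y => - y)); [apply Derive_correct, H|].
  auto_derive; [exact I| ring].
Qed.

Lemma ex_derive_reflect (phi : R -> R) x :
  ex_derive phi (- x) -> ex_derive (fun y => phi (- y)) x.
Proof.
  intro H. exists (- Derive phi (- x)). rewrite <- Derive_reflect by exact H.
  apply Derive_correct.
  apply (ex_derive_comp phi (fun y => - y)); [exact H| auto_derive; exact I].
Qed.

Lemma C1_reflect (phi : R -> R) : C1 phi -> C1 (fun y => phi (- y)).
Proof.
  intros [Hd Hc]. split; intro x; [apply ex_derive_reflect, Hd|].
  apply (continuous_ext (fun y => - Derive phi (- y))).
  - intro y. symmetry. apply Derive_reflect, Hd.
  - apply (continuous_opp (fun y => Derive phi (- y))).
    apply (continuous_comp (fun y => - y) (Derive phi)); [|apply Hc].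
    apply ex_derive_continuous_R. auto_derive; exact I.
Qed.

Lemma convex_visc_solution_reflect u K Kd : convex_visc_solution u K Kd ->
  convex_visc_solution (fun y => u (- y)) (fun y q => K (- y) (- q))
    (fun y q => - Kd (- y) (- q)).
Proof.
  intro S.
  assert (Hneg : forall x, continuous (fun y : R => - y) x)
    by (intro x; apply ex_derive_continuous_R; auto_derive; exact I).
  assert (Hloc : forall (G : R -> Prop) x0 d,
    (forall y, Rabs (y - x0) < d -> G y) ->
    forall y, Rabs (y - - x0) < d -> G (- y)).
  { intros G x0 d HG y Hy. apply HG.
    replace (- y - x0) with (- (y - - x0)) by ring. rewrite Rabs_Ropp. exact Hy. }
  constructor.
  - intro x. apply (continuous_comp (fun y => - y) u); [apply Hneg| apply (cvs_continuous _ _ _ S)].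
  - intros phi x0 Hphi [d [Hd Hm]]. cbv beta.
    replace (Derive phi x0) with (- Derive (fun y => phi (- y)) (- x0))
      by (rewrite Derive_reflect; rewrite !Ropp_involutive; [reflexivity| apply (proj1 Hphi)]).
    rewrite Ropp_involutive.
    apply (cvs_sub _ _ _ S _ (- x0) (C1_reflect phi Hphi)).
    exists d; split; [exact Hd|]. intros y Hy.
    pose proof (Hloc _ x0 d Hm y Hy) as H. cbv beta in *.
    rewrite !Ropp_involutive in *. exact H.
  - intros phi x0 Hphi [d [Hd Hm]]. cbv beta.
    replace (Derive phi x0) with (- Derive (fun y => phi (- y)) (- x0))
      by (rewrite Derive_reflect; rewrite !Ropp_involutive; [reflexivity| apply (proj1 Hphi)]).
    rewrite Ropp_involutive.
    apply (cvs_super _ _ _ S _ (- x0) (C1_reflect phi Hphi)).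
    exists d; split; [exact Hd|]. intros y Hy.
    pose proof (Hloc _ x0 d Hm y Hy) as H. cbv beta in *.
    rewrite !Ropp_involutive in *. exact H.
  - intros y q. apply continuous2_at_comp_opp, (cvs_K_continuous _ _ _ S).
  - intros y q. apply (continuous2_at_opp (fun y q => Kd (- y) (- q))).
    apply continuous2_at_comp_opp, (cvs_Kd_continuous _ _ _ S).
  - intros y q. replace (- Kd (- y) (- q)) with (- (1) * Kd (- y) (- q)) by ring.
    apply (is_derive_comp (K (- y)) (fun q => - q));
      [apply (cvs_K_derive _ _ _ S)| auto_derive; [exact I| ring]].
  - intros y a b Hab. pose proof (cvs_Kd_incr _ _ _ S (- y) (- b) (- a) ltac:(lra)). lra.
  - intros x M. destruct (cvs_superlinear _ _ _ S (- x) M) as [R0 HR0].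
    exists R0. intros q Hq. rewrite <- Rabs_Ropp. apply HR0. rewrite Rabs_Ropp. exact Hq.
Qed.

Section TwoSided.

Variables (u : R -> R) (K Kd : R -> R -> R).
Hypothesis S : convex_visc_solution u K Kd.

Lemma cvs_left_deriv_exists x : exists l, left_deriv u x l /\ K x l = 0.
Proof.
  pose proof (convex_visc_solution_reflect u K Kd S) as S'.
  destruct (cvs_right_deriv_exists _ _ _ S' (- x)) as [r Hr].
  exists (- r). split.
  - apply left_deriv_of_reflect. rewrite Ropp_involutive. exact Hr.
  - pose proof (cvs_right_deriv_root _ _ _ S' (- x) r Hr) as H. cbv beta in H.
    rewrite Ropp_involutive in H. exact H.
Qed.

Lemma cvs_no_convex_kink x r l :
  right_deriv u x r -> left_deriv u x l -> K x r = 0 -> K x l = 0 -> r <= l.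
Proof.
  intros Hr Hl Kr Kl. apply Rnot_lt_le. intro Hlt.
  set (q := (l + r) / 2).
  destruct (Hr ((r - l) / 2) ltac:(lra)) as [d1 [Hd1 H1]].
  destruct (Hl ((r - l) / 2) ltac:(lra)) as [d2 [Hd2 H2]].
  assert (Hmin : local_min_at (fun y => u y - parabola q 0 0 y) x).
  { exists (Rmin d1 d2); split; [apply Rmin_pos; assumption|].
    intros y Hy. pose proof (Rmin_l d1 d2); pose proof (Rmin_r d1 d2).
    apply Rabs_lt_between' in Hy. unfold parabola.
    destruct (Rtotal_order y x) as [Hyx|[->|Hyx]]; [| lra |].
    - specialize (H2 (x - y) ltac:(lra)). apply Rabs_lt_between' in H2.
      replace (x - (x - y)) with y in H2 by ring.
      assert (Hs : (u x - u y) / (x - y) < q) by (unfold q; lra).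
      apply slope_lt_iff in Hs; [lra| exact Hyx].
    - specialize (H1 (y - x) ltac:(lra)). apply Rabs_lt_between' in H1.
      replace (x + (y - x)) with y in H1 by ring.
      assert (Hs : q < (u y - u x) / (y - x)) by (unfold q; lra).
      apply slope_gt_iff in Hs; [lra| exact Hyx]. }
  pose proof (cvs_super _ _ _ S _ x (C1_parabola q 0 0) Hmin) as HK. cbv beta in HK.
  rewrite Derive_parabola in HK. replace (q + 2 * 0 * (x - 0)) with q in HK by ring.
  pose proof (neg_between_roots (K x) (Kd x) (cvs_K_derive _ _ _ S x) (cvs_Kd_incr _ _ _ S x)
    l q r ltac:(unfold q; lra) ltac:(unfold q; lra) Kl Kr).
  lra.
Qed.

Lemma cvs_dichotomy x :
  exists r l, right_deriv u x r /\ left_deriv u x l /\ K x r = 0 /\ K x l = 0 /\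
    ((r = l /\ is_derive u x r) \/ (r < l /\ Kd x r < 0 /\ 0 < Kd x l)).
Proof.
  destruct (cvs_right_deriv_exists _ _ _ S x) as [r Hr].
  pose proof (cvs_right_deriv_root _ _ _ S x r Hr) as Kr.
  destruct (cvs_left_deriv_exists x) as [l [Hl Kl]].
  exists r, l. repeat split; try assumption.
  destruct (cvs_no_convex_kink x r l Hr Hl Kr Kl) as [Hlt| <-].
  - right. split; [exact Hlt|].
    apply (deriv_signs_at_roots (K x) (Kd x) (cvs_K_derive _ _ _ S x) (cvs_Kd_incr _ _ _ S x));
      assumption.
  - left. split; [reflexivity|]. apply is_derive_iff_right_left. split; assumption.
Qed.

Lemma cvs_kink_propagates x r :
  right_deriv u x r -> K x r = 0 -> Kd x r < 0 ->
  exists d, 0 < d /\ forall t, x < t < x + d -> ex_derive u t /\ Kd t (Derive u t) < 0.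
Proof.
  intros Hr Kr Kdr.
  destruct (sign_change_at_root (K x) r (Kd x r) 1 (cvs_K_derive _ _ _ S x r) Kr
    ltac:(lra) ltac:(lra)) as [e [He [_ Hpos]]].
  set (q := r + e).
  assert (Kq : K x q < 0) by (unfold q; nra).
  destruct (continuous2_at_neg_near K x q (cvs_K_continuous _ _ _ S x q) Kq) as [d [Hd Hnear]].
  pose proof (supersolution_quasiconcave K u q (x - d) (x + d) (cvs_super _ _ _ S)
    (cvs_continuous _ _ _ S) ltac:(intros y Hy; apply Hnear, Rabs_lt_between'; lra)) as Hsqc.
  destruct (Hr e ltac:(lra)) as [d1 [Hd1 H1]].
  exists d; split; [exact Hd|]. intros t Ht.
  set (h0 := Rmin d1 (t - x) / 2).
  assert (Hh0 : 0 < h0 < d1 /\ h0 < t - x).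
  { unfold h0. pose proof (Rmin_l d1 (t - x)); pose proof (Rmin_r d1 (t - x)).
    pose proof (Rmin_pos d1 (t - x) Hd1 ltac:(lra)). lra. }
  assert (Hstart : - (u x - q * x) < - (u (x + h0) - q * (x + h0))).
  { specialize (H1 h0 ltac:(lra)). apply Rabs_lt_between' in H1.
    assert (Hs : (u (x + h0) - u x) / h0 < q) by (unfold q; lra).
    apply right_quotient_lt_iff in Hs; lra. }
  pose proof (strictly_quasiconvex_incr_from _ _ _ x (x + h0) Hsqc ltac:(lra) ltac:(lra) Hstart)
    as Hinc.
  cbv beta in Hinc.
  destruct (cvs_dichotomy t) as [rt [lt [Hrt [Hlt [Krt [Klt Hcase]]]]]].
  assert (Hlq : lt <= q).
  { apply (lim_right0_le _ _ q Hlt). exists (t - (x + h0)); split; [lra|]. intros h Hh.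
    specialize (Hinc (t - h) t ltac:(lra) ltac:(lra) ltac:(lra)).
    assert (Hs : (u t - u (t - h)) / (t - (t - h)) < q) by (apply slope_lt_iff; lra).
    replace (t - (t - h)) with h in Hs by ring. lra. }
  assert (Kqt : K t q < 0) by (apply Hnear, Rabs_lt_between'; lra).
  destruct (deriv_neg_at_root_left_of_neg (K t) (Kd t) (cvs_K_derive _ _ _ S t)
    (cvs_Kd_incr _ _ _ S t) lt q Klt Kqt Hlq) as [_ Hdl].
  destruct Hcase as [[-> Hder]|[_ [_ Hl]]]; [|lra].
  split; [exists lt; exact Hder|]. rewrite (is_derive_unique _ _ _ Hder). exact Hdl.
Qed.

(* By the mean value theorem, left difference quotients at [z] are values of [u']
   just left of [z], where [Kd < 0]. *)
Lemma cvs_left_deriv_Kd_nonpos x z l :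
  x < z -> (forall s, x < s < z -> ex_derive u s /\ Kd s (Derive u s) < 0) ->
  left_deriv u z l -> Kd z l <= 0.
Proof.
  intros Hxz Hgood Hl. apply Rnot_lt_le; intro Hpos.
  destruct (cvs_Kd_continuous _ _ _ S z l (Kd z l) Hpos) as [d [Hd Hc]].
  destruct (Hl (d / 2) ltac:(lra)) as [d2 [Hd2 H2]].
  set (h := Rmin (Rmin d d2) (z - x) / 2).
  assert (Hh : 0 < h /\ h < d /\ h < d2 /\ h < z - x).
  { unfold h. pose proof (Rmin_l (Rmin d d2) (z - x)); pose proof (Rmin_r (Rmin d d2) (z - x)).
    pose proof (Rmin_l d d2); pose proof (Rmin_r d d2).
    pose proof (Rmin_pos (Rmin d d2) (z - x) (Rmin_pos d d2 Hd Hd2) ltac:(lra)). lra. }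
  set (a := z - h).
  set (F := fun b => (u b - u a) / (b - a)).
  assert (HFc : continuous F z).
  { apply (continuous_mult (fun b => u b - u a) (fun b => / (b - a))).
    - apply (continuous_minus u (fun _ => u a));
        [apply (cvs_continuous _ _ _ S)| apply continuous_const].
    - apply (continuous_Rinv_comp (fun b => b - a)); [|unfold a; lra].
      apply ex_derive_continuous_R. auto_derive; exact I. }
  destruct (proj1 (continuous_R_iff F z) HFc (d / 2) ltac:(lra)) as [d3 [Hd3 H3]].
  set (b := z - Rmin d3 h / 2).
  assert (Hb : a < b < z /\ Rabs (b - z) < d3).
  { unfold b, a. pose proof (Rmin_l d3 h); pose proof (Rmin_r d3 h).
    pose proof (Rmin_pos d3 h Hd3 ltac:(lra)).
    split; [lra| apply Rabs_lt_between'; lra]. }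
  specialize (H3 b (proj2 Hb)). specialize (H2 h ltac:(lra)).
  assert (HFz : F z = (u z - u a) / h) by (unfold F, a; f_equal; ring).
  destruct (MVT_Derive u a b ltac:(lra)) as [xi [Hxi Heq]];
    [intros y Hy; apply Hgood; unfold a in *; lra| apply (cvs_continuous _ _ _ S)|].
  pose proof (Hgood xi ltac:(unfold a in *; lra)) as [_ Hneg].
  rewrite <- Heq in Hneg. change ((u b - u a) / (b - a)) with (F b) in Hneg.
  apply Rabs_lt_between' in H3. apply Rabs_lt_between' in H2. rewrite HFz in H3.
  specialize (Hc xi (F b) ltac:(apply Rabs_lt_between'; unfold a in *; lra)
    ltac:(apply Rabs_lt_between'; unfold a in *; lra)).
  apply Rabs_lt_between' in Hc. lra.
Qed.

Lemma cvs_good_past x z :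
  (forall x, ex_derive u x -> Kd x (Derive u x) <> 0) -> x < z ->
  (forall s, x < s < z -> ex_derive u s /\ Kd s (Derive u s) < 0) ->
  exists d, 0 < d /\ forall s, x < s < z + d -> ex_derive u s /\ Kd s (Derive u s) < 0.
Proof.
  intros HB Hxz Hgood.
  destruct (cvs_dichotomy z) as [rz [lz [Hrz [Hlz [Krz [_ Hcz]]]]]].
  pose proof (cvs_left_deriv_Kd_nonpos x z lz Hxz Hgood Hlz) as HKdz.
  destruct Hcz as [[<- Hdz]|[_ [_ Hpos]]]; [|lra].
  assert (Hexz : ex_derive u z) by (exists rz; exact Hdz).
  assert (Kdz : Kd z rz < 0).
  { pose proof (HB z Hexz) as Hne. rewrite (is_derive_unique _ _ _ Hdz) in Hne.
    destruct HKdz; [assumption| contradiction]. }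
  destruct (cvs_kink_propagates z rz Hrz Krz Kdz) as [d [Hd Hprop]].
  exists d; split; [exact Hd|]. intros s Hs.
  destruct (Rtotal_order s z) as [Hsz|[->|Hsz]]; [apply Hgood; lra| |apply Hprop; lra].
  split; [exact Hexz| rewrite (is_derive_unique _ _ _ Hdz); exact Kdz].
Qed.

(* A concave kink at [x0] would propagate to the right up to [x0 + 1], i.e. to [x0]. *)
Lemma cvs_differentiable :
  (forall y, u (y + 1) = u y) ->
  (forall x, ex_derive u x -> Kd x (Derive u x) <> 0) ->
  forall x, ex_derive u x.
Proof.
  intros Hper HB x0. apply NNPP; intro Hnd.
  destruct (cvs_dichotomy x0) as [r0 [l0 [Hr0 [_ [Kr0 [_ [[_ Hd]|[_ [Kdr0 _]]]]]]]]];
    [apply Hnd; exists r0; exact Hd|].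
  destruct (cvs_kink_propagates x0 r0 Hr0 Kr0 Kdr0) as [d0 [Hd0 Hprop]].
  set (E := fun t => x0 < t <= x0 + 1 /\
    forall s, x0 < s < t -> ex_derive u s /\ Kd s (Derive u s) < 0).
  set (t0 := x0 + Rmin d0 1).
  assert (Ht0 : E t0).
  { unfold E, t0. pose proof (Rmin_l d0 1); pose proof (Rmin_r d0 1).
    pose proof (Rmin_pos d0 1 Hd0 Rlt_0_1).
    split; [lra| intros s Hs; apply Hprop; lra]. }
  destruct (completeness E) as [z [Hub Hlub]];
    [exists (x0 + 1); intros t [Ht _]; lra| exists t0; exact Ht0|].
  assert (Hz : x0 < z <= x0 + 1).
  { split; [pose proof (Hub t0 Ht0); destruct Ht0; lra|]. apply Hlub. intros t [Ht _]. lra. }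
  assert (Hgood : forall s, x0 < s < z -> ex_derive u s /\ Kd s (Derive u s) < 0).
  { intros s Hs. apply NNPP; intro Hn. enough (z <= s) by lra.
    apply Hlub. intros t [Ht Gt]. apply Rnot_lt_le; intro Hst. apply Hn, Gt. lra. }
  destruct (cvs_good_past x0 z HB (proj1 Hz) Hgood) as [d [Hd Hgood']].
  destruct (Req_dec z (x0 + 1)) as [Hend|Hlt].
  - apply Hnd. destruct (proj1 (Hgood' (x0 + 1) ltac:(lra))) as [l Hl].
    exists l. apply is_derive_periodic; assumption.
  - assert (z < x0 + 1) by (destruct Hz as [_ [Hz| Hz]]; [exact Hz| contradiction]).
    assert (z < Rmin (z + d / 2) (x0 + 1)) by (apply Rmin_glb_lt; lra).
    enough (Rmin (z + d / 2) (x0 + 1) <= z) by lra.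
    apply Hub. split; [unfold Rmin; destruct Rle_dec; lra|].
    intros s Hs. apply Hgood'. pose proof (Rmin_l (z + d / 2) (x0 + 1)). lra.
Qed.

Lemma cvs_Derive_continuous_at_neg x0 :
  (forall x, ex_derive u x) -> (forall x, K x (Derive u x) = 0) ->
  Kd x0 (Derive u x0) < 0 -> continuous (Derive u) x0.
Proof.
  intros Hd HK Hneg. apply continuous_R_iff. intros eta Heta.
  set (p0 := Derive u x0) in *.
  destruct (sign_change_at_root (K x0) p0 (Kd x0 p0) eta (cvs_K_derive _ _ _ S x0 p0) (HK x0)
    ltac:(lra) Heta) as [e [He [Hm Hp]]].
  assert (Ka : 0 < K x0 (p0 - e)) by nra.
  assert (Kb : K x0 (p0 + e) < 0) by nra.
  destruct (continuous2_at_pos_near K x0 _ (cvs_K_continuous _ _ _ S x0 _) Ka) as [da [Hda Hna]].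
  destruct (continuous2_at_neg_near K x0 _ (cvs_K_continuous _ _ _ S x0 _) Kb) as [db [Hdb Hnb]].
  exists (Rmin da db); split; [apply Rmin_pos; assumption|].
  intros y Hy. pose proof (Rmin_l da db); pose proof (Rmin_r da db).
  enough (p0 - e < Derive u y < p0 + e) by (apply Rabs_lt_between'; lra).
  split.
  - apply Rnot_le_lt; intro Hle.
    assert (Ky : 0 < K y (p0 - e)) by (apply Hna; lra).
    assert (Kyb : K y (p0 + e) < 0) by (apply Hnb; lra).
    destruct Hle as [Hlt|Heq]; [|pose proof (HK y) as Hk; rewrite Heq in Hk; lra].
    pose proof (slope_incr (K y) (Kd y) (cvs_K_derive _ _ _ S y) (cvs_Kd_incr _ _ _ S y)
      (Derive u y) (p0 - e) (p0 + e) Hlt ltac:(lra)) as Hs.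
    rewrite HK in Hs.
    assert (0 < (K y (p0 - e) - 0) / (p0 - e - Derive u y)) by (apply Rdiv_lt_0_compat; lra).
    assert ((K y (p0 + e) - K y (p0 - e)) / (p0 + e - (p0 - e)) < 0).
    { unfold Rdiv. apply Rmult_neg_pos; [lra| apply Rinv_0_lt_compat; lra]. }
    lra.
  - apply Rnot_le_lt; intro Hle.
    assert (Ht : exists t, Rabs (t - x0) < Rmin da db /\ Derive u t = p0 + e).
    { destruct Hle as [Hlt|Heq]; [|exists y; split; [exact Hy| symmetry; exact Heq]].
      apply Rabs_lt_between' in Hy.
      destruct (Rtotal_order x0 y) as [Hxy|[<-|Hyx]]; [| unfold p0 in Hlt; lra |].
      - destruct (Darboux u x0 y (p0 + e) Hd Hxy ltac:(left; unfold p0 in *; lra))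
          as [t [Ht Htc]].
        exists t; split; [apply Rabs_lt_between'; lra| exact Htc].
      - destruct (Darboux u y x0 (p0 + e) Hd Hyx ltac:(right; unfold p0 in *; lra))
          as [t [Ht Htc]].
        exists t; split; [apply Rabs_lt_between'; lra| exact Htc]. }
    destruct Ht as [t [Ht Htc]]. pose proof (HK t) as Hk. rewrite Htc in Hk.
    pose proof (Hnb t ltac:(lra)). lra.
Qed.

End TwoSided.

Lemma cvs_Derive_continuous u K Kd : convex_visc_solution u K Kd ->
  (forall x, ex_derive u x) -> (forall x, K x (Derive u x) = 0) ->
  (forall x, Kd x (Derive u x) <> 0) -> forall x, continuous (Derive u) x.
Proof.
  intros S Hd HK HKd x0.
  destruct (Rlt_or_le (Kd x0 (Derive u x0)) 0) as [Hneg|Hpos];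
    [apply (cvs_Derive_continuous_at_neg u K Kd S); assumption|].
  assert (HD : forall y, Derive (fun y => u (- y)) y = - Derive u (- y))
    by (intro; apply Derive_reflect, Hd).
  assert (Hc : continuous (Derive (fun y => u (- y))) (- x0)).
  { apply (cvs_Derive_continuous_at_neg _ _ _ (convex_visc_solution_reflect u K Kd S)).
    - intro y. apply ex_derive_reflect, Hd.
    - intro y. cbv beta. rewrite HD, !Ropp_involutive. apply HK.
    - cbv beta. rewrite HD, !Ropp_involutive.
      destruct Hpos as [|Heq]; [lra| exfalso; apply (HKd x0); auto]. }
  apply (continuous_ext (fun y => - Derive (fun y => u (- y)) (- y))).
  - intro y. rewrite HD, !Ropp_involutive. reflexivity.
  - apply (continuous_opp (fun y => Derive (fun y => u (- y)) (- y))).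
    apply (continuous_comp (fun y => - y) (Derive (fun y => u (- y)))); [|exact Hc].
    apply ex_derive_continuous_R. auto_derive; exact I.
Qed.

Theorem cvs_C1 u K Kd : convex_visc_solution u K Kd ->
  (forall y, u (y + 1) = u y) -> (forall x, ex_derive u x -> Kd x (Derive u x) <> 0) ->
  (forall x, ex_derive u x) /\ (forall x, K x (Derive u x) = 0) /\
  (forall x, continuous (Derive u) x).
Proof.
  intros S Hper HB.
  assert (Hd : forall x, ex_derive u x) by exact (cvs_differentiable u K Kd S Hper HB).
  assert (HK : forall x, K x (Derive u x) = 0).
  { intro x. apply (cvs_right_deriv_root u K Kd S x).
    apply (is_derive_iff_right_left u x), Derive_correct, Hd. }
  split; [exact Hd|]. split; [exact HK|].
  apply (cvs_Derive_continuous u K Kd S Hd HK). intro x. apply HB, Hd.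
Qed.

Fixpoint Cn (n : nat) (f : R -> R) : Prop :=
  match n with
  | O => forall x, continuous f x
  | S m => (forall x, ex_derive f x) /\ Cn m (Derive f)
  end.

Lemma Cn_ext n : forall f g, (forall x, f x = g x) -> Cn n f -> Cn n g.
Proof.
  induction n as [|n IH]; intros f g E Hf.
  - intro x. apply (continuous_ext f); [exact E| apply Hf].
  - destruct Hf as [Hd Hc]. split.
    + intro x. apply (ex_derive_ext f); [exact E| apply Hd].
    + apply (IH (Derive f)); [|exact Hc]. intro x. apply Derive_ext, E.
Qed.

Lemma Cn_S_of_derive n (f g : R -> R) :
  (forall x, is_derive f x (g x)) -> Cn n g -> Cn (S n) f.
Proof.
  intros Hd Hg. split; [intro x; exists (g x); apply Hd|].
  apply (Cn_ext n g); [|exact Hg]. intro x. symmetry. apply is_derive_unique, Hd.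
Qed.

Lemma Cn_continuous n f : Cn n f -> forall x, continuous f x.
Proof. destruct n as [|n]; [auto|]. intros [Hd _] x. apply ex_derive_continuous_R, Hd. Qed.

Lemma Cn_pred n : forall f, Cn (S n) f -> Cn n f.
Proof.
  induction n as [|n IH]; intros f Hf; [exact (Cn_continuous 1 f Hf)|].
  destruct Hf as [Hd Hc]. split; [exact Hd| apply IH, Hc].
Qed.

Lemma Cn_const n c : Cn n (fun _ => c).
Proof.
  revert c; induction n as [|n IH]; intro c; [intro; apply continuous_const|].
  apply (Cn_S_of_derive n _ (fun _ => 0));
    [intro; apply (is_derive_const (V := R_NormedModule))| apply IH].
Qed.

Lemma Cn_id n : Cn n (fun y => y).
Proof.
  destruct n as [|n]; [intro; apply continuous_id|].
  apply (Cn_S_of_derive n _ (fun _ => 1));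
    [intro; apply (is_derive_id (K := R_AbsRing))| apply Cn_const].
Qed.

Lemma Cn_plus n : forall f g, Cn n f -> Cn n g -> Cn n (fun y => f y + g y).
Proof.
  induction n as [|n IH]; intros f g Hf Hg; [intro x; apply (continuous_plus f g); auto|].
  destruct Hf as [Hfd Hfc]. destruct Hg as [Hgd Hgc].
  apply (Cn_S_of_derive n _ (fun y => Derive f y + Derive g y)); [|apply IH; assumption].
  intro x. apply (is_derive_plus f g); apply Derive_correct; auto.
Qed.

Lemma Cn_opp n : forall f, Cn n f -> Cn n (fun y => - f y).
Proof.
  induction n as [|n IH]; intros f Hf; [intro x; apply (continuous_opp f); auto|].
  destruct Hf as [Hfd Hfc].
  apply (Cn_S_of_derive n _ (fun y => - Derive f y)); [|apply IH; assumption].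
  intro x. apply (is_derive_opp f), Derive_correct; auto.
Qed.

Lemma Cn_minus n f g : Cn n f -> Cn n g -> Cn n (fun y => f y - g y).
Proof. intros Hf Hg. apply (Cn_plus n f (fun y => - g y)); [exact Hf| apply Cn_opp, Hg]. Qed.

Lemma Cn_mult n : forall f g, Cn n f -> Cn n g -> Cn n (fun y => f y * g y).
Proof.
  induction n as [|n IH]; intros f g Hf Hg; [intro x; apply (continuous_mult f g); auto|].
  pose proof (Cn_pred n f Hf). pose proof (Cn_pred n g Hg).
  destruct Hf as [Hfd Hfc]. destruct Hg as [Hgd Hgc].
  apply (Cn_S_of_derive n _ (fun y => Derive f y * g y + f y * Derive g y)).
  - intro x. apply (Derive.is_derive_mult f g); apply Derive_correct; auto.
  - apply Cn_plus; apply IH; assumption.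
Qed.

Lemma Cn_inv n : forall g, Cn n g -> (forall x, g x <> 0) -> Cn n (fun y => / g y).
Proof.
  induction n as [|n IH]; intros g Hg Hnz; [intro x; apply continuous_Rinv_comp; auto|].
  pose proof (Cn_pred n g Hg). destruct Hg as [Hgd Hgc].
  apply (Cn_S_of_derive n _ (fun y => - Derive g y * (/ g y * / g y))).
  - intro x. replace (- Derive g x * (/ g x * / g x)) with (- Derive g x / g x ^ 2)
      by (field; apply Hnz).
    apply is_derive_inv; [apply Derive_correct, Hgd| apply Hnz].
  - apply Cn_mult; [apply Cn_opp, Hgc|]. apply Cn_mult; apply IH; assumption.
Qed.

Lemma Cn_exp n : forall f, Cn n f -> Cn n (fun y => exp (f y)).
Proof.
  induction n as [|n IH]; intros f Hf; [intro x; apply continuous_exp_comp; auto|].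
  pose proof (Cn_pred n f Hf). destruct Hf as [Hfd Hfc].
  apply (Cn_S_of_derive n _ (fun y => Derive f y * exp (f y))).
  - intro x. apply (is_derive_comp exp f); [apply is_derive_exp| apply Derive_correct, Hfd].
  - apply Cn_mult; [exact Hfc| apply IH; assumption].
Qed.

Lemma smooth1_of_Cn f : (forall n, Cn n f) -> smooth1 f.
Proof.
  intros Hf n x. destruct n as [|n]; [exact I|].
  simpl. revert f Hf x. induction n as [|n IH]; intros f Hf x; [apply (proj1 (Hf 1%nat))|].
  apply (ex_derive_ext (Derive_n (Derive f) n)).
  - intro t. change (Derive_n (Derive f) n t) with (Derive_n (Derive_n f 1) n t).
    rewrite Derive_n_comp.
    replace (n + 1)%nat with (S n) by (rewrite PeanoNat.Nat.add_comm; reflexivity).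
    reflexivity.
  - apply IH. intro m. apply (proj2 (Hf (S m))).
Qed.

(** * Smooth functions of three variables *)

Lemma iter_partial_app l m F : iter_partial l (iter_partial m F) = iter_partial (l ++ m) F.
Proof.
  induction l as [|a l IH]; [reflexivity|].
  simpl. destruct a as [|[|k]]; rewrite IH; reflexivity.
Qed.

Lemma smooth3_iter_partial F m : smooth3 F -> smooth3 (iter_partial m F).
Proof. intros HF l. rewrite iter_partial_app. apply HF. Qed.

Lemma smooth3_dx F : smooth3 F -> smooth3 (dx F).
Proof. exact (smooth3_iter_partial F (0%nat :: nil)). Qed.

Lemma smooth3_dp F : smooth3 F -> smooth3 (dp F).
Proof. exact (smooth3_iter_partial F (1%nat :: nil)). Qed.

Lemma smooth3_du F : smooth3 F -> smooth3 (du F).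
Proof. exact (smooth3_iter_partial F (2%nat :: nil)). Qed.

Lemma smooth3_is_derive_x F : smooth3 F -> forall p u x, is_derive (fun t => F t p u) x (dx F x p u).
Proof. intros HF p u x. apply Derive_correct, (proj1 (proj1 (HF nil) x p u)). Qed.

Lemma smooth3_is_derive_p F : smooth3 F -> forall x u p, is_derive (fun t => F x t u) p (dp F x p u).
Proof. intros HF x u p. apply Derive_correct, (proj1 (proj2 (proj1 (HF nil) x p u))). Qed.

Lemma smooth3_is_derive_u F : smooth3 F -> forall x p u, is_derive (fun t => F x p t) u (du F x p u).
Proof. intros HF x p u. apply Derive_correct, (proj2 (proj2 (proj1 (HF nil) x p u))). Qed.

Lemma smooth3_continuous F : smooth3 F -> forall x p u eps, 0 < eps -> exists d, 0 < d /\
  forall x' p' u', Rabs (x' - x) < d -> Rabs (p' - p) < d -> Rabs (u' - u) < d ->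
    Rabs (F x' p' u' - F x p u) < eps.
Proof.
  intros HF x p u eps Heps.
  destruct (proj1 (filterlim_locally _ _) (proj2 (HF nil) ((x, p), u)) (mkposreal eps Heps))
    as [d Hd].
  exists d; split; [apply cond_pos|].
  intros x' p' u' H1 H2 H3. apply (Hd ((x', p'), u')). repeat split; assumption.
Qed.

Lemma smooth3_comp_continuous F (a b c : R -> R) x : smooth3 F ->
  continuous a x -> continuous b x -> continuous c x ->
  continuous (fun y => F (a y) (b y) (c y)) x.
Proof.
  intros HF Ha Hb Hc. apply continuous_R_iff. intros eps He.
  destruct (smooth3_continuous F HF (a x) (b x) (c x) eps He) as [d [Hd H]].
  destruct (proj1 (continuous_R_iff a x) Ha d Hd) as [d1 [Hd1 H1]].
  destruct (proj1 (continuous_R_iff b x) Hb d Hd) as [d2 [Hd2 H2]].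
  destruct (proj1 (continuous_R_iff c x) Hc d Hd) as [d3 [Hd3 H3]].
  exists (Rmin d1 (Rmin d2 d3)). split; [repeat apply Rmin_pos; assumption|].
  intros y Hy. pose proof (Rmin_l d1 (Rmin d2 d3)); pose proof (Rmin_r d1 (Rmin d2 d3)).
  pose proof (Rmin_l d2 d3); pose proof (Rmin_r d2 d3).
  apply H; [apply H1| apply H2| apply H3]; lra.
Qed.

Lemma is_lim_0_iff (f : R -> R) (l : R) :
  is_lim f 0 l <-> forall eps, 0 < eps -> exists d, 0 < d /\
    forall h, h <> 0 -> Rabs h < d -> Rabs (f h - l) < eps.
Proof.
  rewrite <- is_lim_spec. simpl. split.
  - intros H eps He. destruct (H (mkposreal eps He)) as [d Hd].
    exists d; split; [apply cond_pos|]. intros h Hh Hhd. apply Hd; [|exact Hh].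
    change (Rabs (h - 0) < d). rewrite Rminus_0_r. exact Hhd.
  - intros H eps. destruct (H eps (cond_pos eps)) as [d [Hd Hh]]. exists (mkposreal d Hd).
    intros h Hhd Hh0. apply Hh; [exact Hh0|].
    change (Rabs (h - 0) < d) in Hhd. rewrite Rminus_0_r in Hhd. exact Hhd.
Qed.

Lemma is_derive_iff_is_lim (f : R -> R) x l :
  is_derive f x l <-> is_lim (fun h => (f (x + h) - f x) / h) 0 l.
Proof.
  rewrite is_derive_Reals, is_lim_0_iff. split.
  - intros H eps He. destruct (H eps He) as [d Hd].
    exists d; split; [apply cond_pos| exact Hd].
  - intros H eps He. destruct (H eps He) as [d [Hd Hh]]. exists (mkposreal d Hd). exact Hh.
Qed.

Lemma is_lim_continuous (f : R -> R) x : continuous f x -> is_lim (fun h => f (x + h)) 0 (f x).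
Proof.
  intro Hc. apply is_lim_0_iff. intros eps He.
  destruct (proj1 (continuous_R_iff f x) Hc eps He) as [d [Hd H]].
  exists d; split; [exact Hd|]. intros h _ Hh. apply H. replace (x + h - x) with h by ring. exact Hh.
Qed.

(* The value [dg a] on the diagonal keeps [DQ_mean_value] true when [b = a]. *)
Definition DQ (g dg : R -> R) (a b : R) : R :=
  if Req_EM_T b a then dg a else (g b - g a) / (b - a).

Lemma DQ_spec g dg a b : g b - g a = DQ g dg a b * (b - a).
Proof. unfold DQ. destruct (Req_EM_T b a) as [->|Hne]; [ring| field; lra]. Qed.

Lemma DQ_mean_value g dg a b : (forall t, is_derive g t (dg t)) ->
  exists xi, Rabs (xi - a) <= Rabs (b - a) /\ DQ g dg a b = dg xi.
Proof.
  intro Hd. unfold DQ. destruct (Req_EM_T b a) as [->|Hne].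
  - exists a. rewrite Rminus_eq_0, Rabs_R0. split; [lra| reflexivity].
  - destruct (MVT_gen g a b dg) as [xi [Hxi Heq]];
      [intros; apply Hd|
       intros t _; apply continuity_pt_filterlim, (is_derive_continuous_R g t (dg t)), Hd|].
    exists xi. split.
    + unfold Rmin, Rmax in Hxi. destruct Rle_dec; apply Rabs_le_between;
        [rewrite (Rabs_right (b - a)) by lra| rewrite (Rabs_left (b - a)) by lra]; lra.
    + rewrite Heq. field. lra.
Qed.

Lemma is_lim_mult_R (f g : R -> R) x (a b : R) :
  is_lim f x a -> is_lim g x b -> is_lim (fun h => f h * g h) x (a * b).
Proof. intros Ha Hb. apply (is_lim_mult f g x a b Ha Hb). exact I. Qed.

Lemma is_lim_inv_R (f : R -> R) x (a : R) :
  is_lim f x a -> a <> 0 -> is_lim (fun h => / f h) x (/ a).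
Proof.
  intros Ha Hnz. apply (is_lim_inv f x a Ha). intro E. injection E. exact Hnz.
Qed.

Definition Qx F x x' p' u' := DQ (fun t => F t p' u') (fun t => dx F t p' u') x x'.
Definition Qp F x p p' u' := DQ (fun t => F x t u') (fun t => dp F x t u') p p'.
Definition Qu F x p u u' := DQ (fun t => F x p t) (fun t => du F x p t) u u'.

Lemma increment3 F x p u x' p' u' :
  F x' p' u' - F x p u =
  Qx F x x' p' u' * (x' - x) + Qp F x p p' u' * (p' - p) + Qu F x p u u' * (u' - u).
Proof.
  unfold Qx, Qp, Qu. rewrite <- !DQ_spec. ring.
Qed.

Section PartialQuotients.

Variable F : R -> R -> R -> R.
Hypothesis HF : smooth3 F.
Variables (x p u : R) (X P U : R -> R).
Hypotheses (HX : is_lim X 0 x) (HP : is_lim P 0 p) (HU : is_lim U 0 u).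

Lemma is_lim_intermediate (G : R -> R -> R -> R) (Q : R -> R) : smooth3 G ->
  (forall h, exists a b c, Rabs (a - x) <= Rabs (X h - x) /\ Rabs (b - p) <= Rabs (P h - p) /\
     Rabs (c - u) <= Rabs (U h - u) /\ Q h = G a b c) ->
  is_lim Q 0 (G x p u).
Proof.
  intros HG HQ. apply is_lim_0_iff. intros eps He.
  destruct (smooth3_continuous G HG x p u eps He) as [d [Hd Hc]].
  destruct (proj1 (is_lim_0_iff X x) HX d Hd) as [d1 [Hd1 K1]].
  destruct (proj1 (is_lim_0_iff P p) HP d Hd) as [d2 [Hd2 K2]].
  destruct (proj1 (is_lim_0_iff U u) HU d Hd) as [d3 [Hd3 K3]].
  exists (Rmin d1 (Rmin d2 d3)). split; [repeat apply Rmin_pos; assumption|].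
  intros h Hh Hh'.
  pose proof (Rmin_l d1 (Rmin d2 d3)); pose proof (Rmin_r d1 (Rmin d2 d3)).
  pose proof (Rmin_l d2 d3); pose proof (Rmin_r d2 d3).
  destruct (HQ h) as [a [b [c [E1 [E2 [E3 ->]]]]]].
  specialize (K1 h Hh ltac:(lra)). specialize (K2 h Hh ltac:(lra)). specialize (K3 h Hh ltac:(lra)).
  apply Hc; lra.
Qed.

Lemma is_lim_Qx : is_lim (fun h => Qx F x (X h) (P h) (U h)) 0 (dx F x p u).
Proof.
  apply (is_lim_intermediate (dx F)); [apply smooth3_dx, HF|]. intro h.
  destruct (DQ_mean_value _ _ x (X h) (smooth3_is_derive_x F HF (P h) (U h))) as [xi [Hxi E]].
  exists xi, (P h), (U h). repeat split; [exact Hxi| lra| lra| exact E].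
Qed.

Lemma is_lim_Qp : is_lim (fun h => Qp F x p (P h) (U h)) 0 (dp F x p u).
Proof.
  apply (is_lim_intermediate (dp F)); [apply smooth3_dp, HF|]. intro h.
  destruct (DQ_mean_value _ _ p (P h) (smooth3_is_derive_p F HF x (U h))) as [pi [Hpi E]].
  exists x, pi, (U h). rewrite Rminus_eq_0, Rabs_R0.
  repeat split; [apply Rabs_pos| exact Hpi| lra| exact E].
Qed.

Lemma is_lim_Qu : is_lim (fun h => Qu F x p u (U h)) 0 (du F x p u).
Proof.
  apply (is_lim_intermediate (du F)); [apply smooth3_du, HF|]. intro h.
  destruct (DQ_mean_value _ _ u (U h) (smooth3_is_derive_u F HF x p)) as [ui [Hui E]].
  exists x, p, ui. rewrite !Rminus_eq_0, Rabs_R0.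
  repeat split; [apply Rabs_pos| apply Rabs_pos| exact Hui| exact E].
Qed.

End PartialQuotients.

Lemma is_derive_comp3 F (a b c : R -> R) (x da db dc : R) : smooth3 F ->
  is_derive a x da -> is_derive b x db -> is_derive c x dc ->
  is_derive (fun y => F (a y) (b y) (c y)) x
    (dx F (a x) (b x) (c x) * da + dp F (a x) (b x) (c x) * db + du F (a x) (b x) (c x) * dc).
Proof.
  intros HF Ha Hb Hc. apply is_derive_iff_is_lim.
  pose proof (is_lim_continuous a x (is_derive_continuous_R a x da Ha)) as Wa.
  pose proof (is_lim_continuous b x (is_derive_continuous_R b x db Hb)) as Wb.
  pose proof (is_lim_continuous c x (is_derive_continuous_R c x dc Hc)) as Wc.
  apply (is_lim_ext (fun h =>
      Qx F (a x) (a (x + h)) (b (x + h)) (c (x + h)) * ((a (x + h) - a x) / h)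
    + Qp F (a x) (b x) (b (x + h)) (c (x + h)) * ((b (x + h) - b x) / h)
    + Qu F (a x) (b x) (c x) (c (x + h)) * ((c (x + h) - c x) / h))).
  { intro h. rewrite increment3. unfold Rdiv. ring. }
  apply is_lim_plus'; [apply is_lim_plus'|]; apply is_lim_mult_R.
  - apply (is_lim_Qx F HF _ _ _ (fun h => a (x + h)) (fun h => b (x + h)) (fun h => c (x + h)));
      assumption.
  - apply is_derive_iff_is_lim, Ha.
  - apply (is_lim_Qp F HF _ _ _ (fun _ => a x) (fun h => b (x + h)) (fun h => c (x + h)));
      [apply is_lim_const| assumption| assumption].
  - apply is_derive_iff_is_lim, Hb.
  - apply (is_lim_Qu F HF _ _ _ (fun _ => a x) (fun _ => b x) (fun h => c (x + h)));
      [apply is_lim_const| apply is_lim_const| assumption].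
  - apply is_derive_iff_is_lim, Hc.
Qed.

Lemma is_derive_implicit F (p u : R -> R) (x du0 : R) : smooth3 F ->
  continuous p x -> is_derive u x du0 -> (forall t, F t (p t) (u t) = 0) ->
  dp F x (p x) (u x) <> 0 ->
  is_derive p x (- (dx F x (p x) (u x) + du F x (p x) (u x) * du0) / dp F x (p x) (u x)).
Proof.
  intros HF Hp Hu H0 Hnz. apply is_derive_iff_is_lim.
  pose proof (is_lim_continuous (fun y => y) x (continuous_id x)) as Wx.
  pose proof (is_lim_continuous p x Hp) as Wp.
  pose proof (is_lim_continuous u x (is_derive_continuous_R u x du0 Hu)) as Wu.
  set (M1 := fun h => Qx F x (x + h) (p (x + h)) (u (x + h))).
  set (M2 := fun h => Qp F x (p x) (p (x + h)) (u (x + h))).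
  set (M3 := fun h => Qu F x (p x) (u x) (u (x + h))).
  assert (C2 : is_lim M2 0 (dp F x (p x) (u x)))
    by (apply (is_lim_Qp F HF _ _ _ (fun _ => x) (fun h => p (x + h)) (fun h => u (x + h)));
        [apply is_lim_const| assumption| assumption]).
  assert (Hnz2 : exists d, 0 < d /\ forall h, h <> 0 -> Rabs h < d -> M2 h <> 0).
  { destruct (proj1 (is_lim_0_iff M2 _) C2 (Rabs (dp F x (p x) (u x)) / 2)
      ltac:(apply Rdiv_lt_0_compat; [apply Rabs_pos_lt; exact Hnz| lra])) as [d [Hd Hh]].
    exists d; split; [exact Hd|]. intros h Hh0 Hh1 E. specialize (Hh h Hh0 Hh1).
    rewrite E, Rminus_0_l, Rabs_Ropp in Hh. pose proof (Rabs_pos_lt _ Hnz). lra. }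
  apply (is_lim_ext_loc (fun h => - (M1 h + M3 h * ((u (x + h) - u x) / h)) * / M2 h)).
  { destruct Hnz2 as [d [Hd Hh]]. exists (mkposreal d Hd). intros h Hhd Hh0.
    change (Rabs (h - 0) < d) in Hhd. rewrite Rminus_0_r in Hhd.
    pose proof (increment3 F x (p x) (u x) (x + h) (p (x + h)) (u (x + h))) as E.
    rewrite !H0 in E. fold (M1 h) (M2 h) (M3 h) in E.
    specialize (Hh h Hh0 Hhd).
    enough (Eh : - (M1 h + M3 h * ((u (x + h) - u x) / h)) * / M2 h = (p (x + h) - p x) / h)
      by exact Eh.
    field_simplify_eq; [|split; assumption]. nra. }
  apply is_lim_mult_R.
  - apply (is_lim_opp _ 0 (_ + _)). apply is_lim_plus'.
    + apply (is_lim_Qx F HF _ _ _ (fun h => x + h) (fun h => p (x + h)) (fun h => u (x + h)));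
        assumption.
    + apply is_lim_mult_R;
        [apply (is_lim_Qu F HF _ _ _ (fun _ => x) (fun _ => p x) (fun h => u (x + h)));
          [apply is_lim_const| apply is_lim_const| assumption]|].
      apply is_derive_iff_is_lim, Hu.
  - apply is_lim_inv_R; assumption.
Qed.

Lemma Cn_comp3 n : forall F a b c, smooth3 F -> Cn n a -> Cn n b -> Cn n c ->
  Cn n (fun y => F (a y) (b y) (c y)).
Proof.
  induction n as [|n IH]; intros F a b c HF Ha Hb Hc;
    [intro x; apply smooth3_comp_continuous; auto|].
  pose proof (Cn_pred n a Ha); pose proof (Cn_pred n b Hb); pose proof (Cn_pred n c Hc).
  destruct Ha as [Had Hac]. destruct Hb as [Hbd Hbc]. destruct Hc as [Hcd Hcc].
  apply (Cn_S_of_derive n _ (fun x => dx F (a x) (b x) (c x) * Derive a x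
    + dp F (a x) (b x) (c x) * Derive b x + du F (a x) (b x) (c x) * Derive c x)).
  - intro x. apply is_derive_comp3; [exact HF| ..]; apply Derive_correct; auto.
  - apply Cn_plus; [apply Cn_plus|]; apply Cn_mult; try assumption; apply IH;
      auto using smooth3_dx, smooth3_dp, smooth3_du.
Qed.

(* Bootstrap: the implicit-function formula for [u''] in terms of [u'] and [u]
   gains one derivative at a time. *)
Lemma Cn_of_implicit F u : smooth3 F ->
  (forall x, ex_derive u x) -> (forall x, continuous (Derive u) x) ->
  (forall x, F x (Derive u x) (u x) = 0) -> (forall x, dp F x (Derive u x) (u x) <> 0) ->
  forall n, Cn n u.
Proof.
  intros HF Hd Hc H0 Hnz.
  assert (HDu : forall n, Cn n (Derive u)).
  { induction n as [|n IH]; [exact Hc|].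
    assert (Hu : Cn n u) by (apply Cn_pred; split; assumption).
    apply (Cn_S_of_derive n _ (fun x =>
      - (dx F x (Derive u x) (u x) + du F x (Derive u x) (u x) * Derive u x)
        / dp F x (Derive u x) (u x))).
    - intro x. apply (is_derive_implicit F (Derive u) u); auto. apply Derive_correct, Hd.
    - unfold Rdiv. apply Cn_mult; [apply Cn_opp, Cn_plus; [|apply Cn_mult; [|exact IH]]|
        apply Cn_inv; [|exact Hnz]];
        apply (Cn_comp3 n _ (fun y => y)); auto using Cn_id, smooth3_dx, smooth3_dp, smooth3_du. }
  intro n. apply Cn_pred. split; [exact Hd| apply HDu].
Qed.

Lemma uniform_continuity_along (G : R -> R -> R -> R) (a b : R -> R) : smooth3 G ->
  (forall x, continuous a x) -> (forall x, continuous b x) ->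
  forall eta, 0 < eta -> exists d, 0 < d /\ forall x D1 D2, 0 <= x <= 1 ->
    Rabs D1 < d -> Rabs D2 < d -> Rabs (G x (a x + D1) (b x + D2) - G x (a x) (b x)) < eta.
Proof.
  intros HG Ha Hb eta Heta.
  assert (Hloc : forall t, exists d : posreal, forall x D1 D2, Rabs (x - t) < d ->
      Rabs D1 < d -> Rabs D2 < d -> Rabs (G x (a x + D1) (b x + D2) - G x (a x) (b x)) < eta).
  { intro t.
    destruct (smooth3_continuous G HG t (a t) (b t) (eta / 2) ltac:(lra)) as [d1 [Hd1 H1]].
    destruct (proj1 (continuous_R_iff a t) (Ha t) (d1 / 2) ltac:(lra)) as [da [Hda Ka]].
    destruct (proj1 (continuous_R_iff b t) (Hb t) (d1 / 2) ltac:(lra)) as [db [Hdb Kb]].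
    set (d := Rmin (d1 / 2) (Rmin da db)).
    assert (Hd : 0 < d /\ d <= d1 / 2 /\ d <= da /\ d <= db).
    { unfold d. pose proof (Rmin_l (d1 / 2) (Rmin da db)); pose proof (Rmin_r (d1 / 2) (Rmin da db)).
      pose proof (Rmin_l da db); pose proof (Rmin_r da db).
      pose proof (Rmin_pos (d1 / 2) (Rmin da db) ltac:(lra) (Rmin_pos da db Hda Hdb)). lra. }
    exists (mkposreal d (proj1 Hd)). simpl. intros x D1 D2 Hx HD1 HD2.
    specialize (Ka x ltac:(lra)). specialize (Kb x ltac:(lra)).
    apply Rabs_lt_between' in Ka; apply Rabs_lt_between' in Kb.
    apply Rabs_lt_between' in Hx; rewrite Rabs_lt_between in HD1, HD2.
    pose proof (H1 x (a x + D1) (b x + D2) ltac:(apply Rabs_lt_between'; lra)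
      ltac:(apply Rabs_lt_between'; lra) ltac:(apply Rabs_lt_between'; lra)) as E1.
    pose proof (H1 x (a x) (b x) ltac:(apply Rabs_lt_between'; lra)
      ltac:(apply Rabs_lt_between'; lra) ltac:(apply Rabs_lt_between'; lra)) as E2.
    apply Rabs_lt_between' in E1; apply Rabs_lt_between' in E2. apply Rabs_lt_between'; lra. }
  destruct (compactness_value_1d 0 1
    (fun t => proj1_sig (constructive_indefinite_description _ (Hloc t))))
    as [d Hd].
  exists d; split; [apply cond_pos|]. intros x D1 D2 Hx HD1 HD2.
  apply NNPP; intro Hn. apply (Hd x Hx). intros [t [Ht [Hxt Hdt]]].
  destruct (constructive_indefinite_description _ (Hloc t)) as [dt Hdt']. simpl in *.
  apply Hn, Hdt'; lra.
Qed.

Lemma is_derive_along_line F (x p v P Q t : R) : smooth3 F ->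
  is_derive (fun t => F x (p - t * P) (v - t * Q)) t
    (- (dp F x (p - t * P) (v - t * Q) * P + du F x (p - t * P) (v - t * Q) * Q)).
Proof.
  intro HF.
  replace (- (dp F x (p - t * P) (v - t * Q) * P + du F x (p - t * P) (v - t * Q) * Q))
    with (dx F x (p - t * P) (v - t * Q) * 0 + dp F x (p - t * P) (v - t * Q) * (- P)
          + du F x (p - t * P) (v - t * Q) * (- Q)) by ring.
  apply (is_derive_comp3 F (fun _ => x) (fun t => p - t * P) (fun t => v - t * Q));
    [exact HF| apply (is_derive_const (V := R_NormedModule))| auto_derive; [exact I| ring]..].
Qed.

Lemma linearization_uniform F (a b w w' : R -> R) M : smooth3 F ->
  (forall x, continuous a x) -> (forall x, continuous b x) ->
  (forall x, 0 <= x <= 1 -> Rabs (w x) <= M /\ Rabs (w' x) <= M) ->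
  forall eta, 0 < eta -> exists delta, 0 < delta /\ forall x t, 0 <= x <= 1 -> Rabs t <= delta ->
    Rabs (dp F x (a x - t * w' x) (b x - t * w x) * w' x
          + du F x (a x - t * w' x) (b x - t * w x) * w x
          - (dp F x (a x) (b x) * w' x + du F x (a x) (b x) * w x)) < eta.
Proof.
  intros HF Ha Hb HM eta Heta.
  assert (HM0 : 0 <= M) by (destruct (HM 0 ltac:(lra)) as [H0 _]; pose proof (Rabs_pos (w 0)); lra).
  set (eta' := eta / (2 * (M + 1))).
  assert (Heta' : 0 < eta') by (unfold eta'; apply Rdiv_lt_0_compat; lra).
  destruct (uniform_continuity_along (dp F) a b (smooth3_dp F HF) Ha Hb eta' Heta') as [d1 [Hd1 K1]].
  destruct (uniform_continuity_along (du F) a b (smooth3_du F HF) Ha Hb eta' Heta') as [d2 [Hd2 K2]].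
  set (d := Rmin d1 d2).
  assert (Hd : 0 < d /\ d <= d1 /\ d <= d2).
  { unfold d. pose proof (Rmin_l d1 d2); pose proof (Rmin_r d1 d2).
    pose proof (Rmin_pos d1 d2 Hd1 Hd2). lra. }
  exists (d / (2 * (M + 1))). split; [apply Rdiv_lt_0_compat; lra|].
  intros x t Hx Ht. destruct (HM x Hx) as [Hw Hw'].
  assert (Hsmall : forall z, Rabs z <= M -> Rabs (- (t * z)) < d).
  { intros z Hz. rewrite Rabs_Ropp, Rabs_mult.
    apply Rle_lt_trans with (d / (2 * (M + 1)) * (M + 1));
      [apply Rmult_le_compat; try apply Rabs_pos; lra|].
    replace (d / (2 * (M + 1)) * (M + 1)) with (d / 2) by (field; lra). lra. }
  pose proof (Hsmall _ Hw) as Ew. pose proof (Hsmall _ Hw') as Ew'.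
  pose proof (K1 x (- (t * w' x)) (- (t * w x)) Hx ltac:(lra) ltac:(lra)) as B1.
  pose proof (K2 x (- (t * w' x)) (- (t * w x)) Hx ltac:(lra) ltac:(lra)) as B2.
  replace (a x + - (t * w' x)) with (a x - t * w' x) in B1, B2 by ring.
  replace (b x + - (t * w x)) with (b x - t * w x) in B1, B2 by ring.
  set (P := dp F x (a x - t * w' x) (b x - t * w x)) in *.
  set (Q := du F x (a x - t * w' x) (b x - t * w x)) in *.
  replace (P * w' x + Q * w x - (dp F x (a x) (b x) * w' x + du F x (a x) (b x) * w x))
    with ((P - dp F x (a x) (b x)) * w' x + (Q - du F x (a x) (b x)) * w x) by ring.
  eapply Rle_lt_trans; [apply Rabs_triang|]. rewrite !Rabs_mult.
  apply Rle_lt_trans with (eta' * M + eta' * M);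
    [apply Rplus_le_compat; apply Rmult_le_compat; try apply Rabs_pos; lra|].
  replace (eta' * M + eta' * M) with (eta * (M / (M + 1))) by (unfold eta'; field; lra).
  assert (M / (M + 1) < 1) by (apply (Rmult_lt_reg_r (M + 1)); [lra|]; field_simplify; lra).
  nra.
Qed.

Lemma continuous2_at_along F (w : R -> R) y q : smooth3 F -> continuous w y ->
  continuous2_at (fun y q => F y q (w y)) y q.
Proof.
  intros HF Hw eps He.
  destruct (smooth3_continuous F HF y q (w y) eps He) as [d [Hd Hc]].
  destruct (proj1 (continuous_R_iff w y) Hw d Hd) as [d1 [Hd1 H1]].
  exists (Rmin d d1); split; [apply Rmin_pos; assumption|].
  intros y' q' Hy Hq. pose proof (Rmin_l d d1); pose proof (Rmin_r d d1).
  apply Hc; [lra| lra| apply H1; lra].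
Qed.

Lemma dp_strictly_incr H : smooth3 H -> (forall x p u, 0 < dp (dp H) x p u) ->
  forall x u a b, a < b -> dp H x a u < dp H x b u.
Proof.
  intros HS Hc x u a b Hab.
  destruct (MVT_gen (fun t => dp H x t u) a b (fun t => dp (dp H) x t u)) as [c [_ Heq]].
  - intros t _. apply (smooth3_is_derive_p (dp H) (smooth3_dp H HS) x u t).
  - intros t _. apply continuity_pt_filterlim, (ex_derive_continuous_R (fun t => dp H x t u)).
    eexists. apply (smooth3_is_derive_p (dp H) (smooth3_dp H HS) x u t).
  - specialize (Hc x c u). assert (0 < dp (dp H) x c u * (b - a)) by (apply Rmult_lt_0_compat; lra).
    lra.
Qed.

Lemma viscosity_solution_convex H u0 :
  smooth3 H -> (forall x p u, 0 < dp (dp H) x p u) -> superlinear_in_p H ->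
  viscosity_solution H u0 ->
  convex_visc_solution u0 (fun y q => H y q (u0 y)) (fun y q => dp H y q (u0 y)).
Proof.
  intros HS Hc Hsup [_ [Hu [Hsub Hsupv]]]. constructor.
  - exact Hu.
  - exact Hsub.
  - exact Hsupv.
  - intros y q. apply continuous2_at_along; [exact HS| apply Hu].
  - intros y q. apply continuous2_at_along; [apply smooth3_dp, HS| apply Hu].
  - intros y q. apply (smooth3_is_derive_p H HS y (u0 y) q).
  - intros y a b. apply dp_strictly_incr; assumption.
  - intros x M. apply Hsup.
Qed.

(** * The weight [rho] and the sign of [H] along [u_eps] *)

Definition rho_rate (H : R -> R -> R -> R) (u0 : R -> R) (t : R) : R :=
  (mu_of H u0 - Hu_along H u0 t) / Bfun H u0 t.

Section Perturbation.

Variables (H : R -> R -> R -> R) (u0 : R -> R).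
Hypothesis HS : smooth3 H.
Hypothesis Hper : forall x p u, H (x + 1) p u = H x p u.
Hypothesis Hu0_per : forall x, u0 (x + 1) = u0 x.
Hypothesis Hu0_d : forall x, ex_derive u0 x.
Hypothesis Hu0_c : forall x, continuous (Derive u0) x.
Hypothesis Hu0_eq : forall x, H x (Derive u0 x) (u0 x) = 0.
Hypothesis HB : forall x, Bfun H u0 x <> 0.

Lemma u0_Cn n : Cn n u0.
Proof. exact (Cn_of_implicit H u0 HS Hu0_d Hu0_c Hu0_eq HB n). Qed.

Lemma Derive_u0_Cn n : Cn n (Derive u0).
Proof. exact (proj2 (u0_Cn (S n))). Qed.

Lemma Bfun_Cn n : Cn n (Bfun H u0).
Proof.
  apply (Cn_comp3 n (dp H) (fun y => y)); auto using smooth3_dp, Cn_id, Derive_u0_Cn, u0_Cn.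
Qed.

Lemma Hu_along_Cn n : Cn n (Hu_along H u0).
Proof.
  apply (Cn_comp3 n (du H) (fun y => y)); auto using smooth3_du, Cn_id, Derive_u0_Cn, u0_Cn.
Qed.

Lemma rho_rate_Cn n : Cn n (rho_rate H u0).
Proof.
  apply (Cn_mult n (fun t => mu_of H u0 - Hu_along H u0 t) (fun t => / Bfun H u0 t)).
  - apply Cn_minus; [apply Cn_const| apply Hu_along_Cn].
  - apply Cn_inv; [apply Bfun_Cn| exact HB].
Qed.

Lemma rho_rate_continuous x : continuous (rho_rate H u0) x.
Proof. exact (rho_rate_Cn 0 x). Qed.

Lemma rho_rate_periodic x : rho_rate H u0 (x + 1) = rho_rate H u0 x.
Proof.
  unfold rho_rate, Bfun, Hu_along, dp, du.
  rewrite (Derive_periodic u0 x Hu0_per (Hu0_d _)), Hu0_per.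
  rewrite !(Derive_ext (fun t => H (x + 1) _ _) (fun t => H x _ _)) by (intro; apply Hper).
  reflexivity.
Qed.

Lemma RInt_inv_Bfun_neq0 : RInt (fun t => / Bfun H u0 t) 0 1 <> 0.
Proof.
  assert (Hc : forall x, continuous (fun t => / Bfun H u0 t) x)
    by (intro x; apply continuous_Rinv_comp; [apply (Bfun_Cn 0)| apply HB]).
  assert (E0 : RInt (fun _ => 0) 0 1 = 0).
  { rewrite RInt_const. unfold scal; simpl; unfold mult; simpl. ring. }
  destruct (continuous_nonvanishing_sign (Bfun H u0) (Bfun_Cn 0) HB) as [Hp|Hn].
  - assert (RInt (fun _ => 0) 0 1 < RInt (fun t => / Bfun H u0 t) 0 1); [|lra].
    apply RInt_lt; [lra| intros; apply Hc| intros; apply continuous_const|].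
    intros x _. apply Rinv_0_lt_compat, Hp.
  - assert (RInt (fun t => / Bfun H u0 t) 0 1 < RInt (fun _ => 0) 0 1); [|lra].
    apply RInt_lt; [lra| intros; apply continuous_const| intros; apply Hc|].
    intros x _. apply Rinv_lt_0_compat, Hn.
Qed.

(* This is what the choice of [mu] is for. *)
Lemma RInt_rho_rate_period : RInt (rho_rate H u0) 0 1 = 0.
Proof.
  assert (HcB : forall x, continuous (fun t => / Bfun H u0 t) x)
    by (intro x; apply continuous_Rinv_comp; [apply (Bfun_Cn 0)| apply HB]).
  assert (HcHB : forall x, continuous (fun t => Hu_along H u0 t / Bfun H u0 t) x)
    by (intro x; apply (continuous_mult (Hu_along H u0)); [apply (Hu_along_Cn 0)| apply HcB]).
  rewrite (RInt_ext (V := R_CompleteNormedModule) (rho_rate H u0)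
     (fun t => minus (scal (mu_of H u0) (/ Bfun H u0 t)) (Hu_along H u0 t / Bfun H u0 t))).
  2: { intros x _. unfold rho_rate, minus, plus, opp, scal; simpl. unfold mult; simpl.
       field. apply HB. }
  rewrite (RInt_minus (V := R_CompleteNormedModule)).
  2: { apply ex_RInt_R. intro z. apply (continuous_mult (fun _ => mu_of H u0));
       [apply continuous_const| apply HcB]. }
  2: { apply ex_RInt_R, HcHB. }
  rewrite (RInt_scal (V := R_CompleteNormedModule)) by (apply ex_RInt_R, HcB).
  unfold minus, plus, opp, scal; simpl. unfold mult; simpl.
  unfold mu_of. field. apply RInt_inv_Bfun_neq0.
Qed.

Lemma RInt_rho_rate_shift x : RInt (rho_rate H u0) 0 (x + 1) = RInt (rho_rate H u0) 0 x.
Proof.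
  rewrite <- (RInt_Chasles (V := R_CompleteNormedModule) (rho_rate H u0) 0 1 (x + 1))
    by (apply ex_RInt_R, rho_rate_continuous).
  rewrite RInt_rho_rate_period.
  pose proof (RInt_comp_lin (V := R_CompleteNormedModule) (rho_rate H u0) 1 1 0 x) as E.
  replace (1 * 0 + 1) with 1 in E by ring. replace (1 * x + 1) with (x + 1) in E by ring.
  rewrite <- E by (apply ex_RInt_R, rho_rate_continuous).
  unfold plus; simpl. rewrite Rplus_0_l.
  apply (RInt_ext (V := R_CompleteNormedModule)). intros y _.
  unfold scal; simpl; unfold mult; simpl. rewrite Rmult_1_l.
  replace (1 * y + 1) with (y + 1) by ring. apply rho_rate_periodic.
Qed.

Lemma rho_periodic x : rho_of H u0 (x + 1) = rho_of H u0 x.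
Proof. unfold rho_of. fold (rho_rate H u0). rewrite RInt_rho_rate_shift. reflexivity. Qed.

Lemma is_derive_RInt_rho_rate x :
  is_derive (fun y => RInt (rho_rate H u0) 0 y) x (rho_rate H u0 x).
Proof.
  apply (is_derive_RInt (V := R_CompleteNormedModule) _ (fun y => RInt (rho_rate H u0) 0 y) 0 x).
  - exists (mkposreal 1 Rlt_0_1). intros y _. apply (RInt_correct (V := R_CompleteNormedModule)).
    apply ex_RInt_R, rho_rate_continuous.
  - apply rho_rate_continuous.
Qed.

Lemma is_derive_rho x : is_derive (rho_of H u0) x (rho_rate H u0 x * rho_of H u0 x).
Proof.
  apply (is_derive_comp exp (fun y => RInt (rho_rate H u0) 0 y));
    [apply is_derive_exp| apply is_derive_RInt_rho_rate].
Qed.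

Lemma rho_Cn n : Cn n (rho_of H u0).
Proof.
  apply (Cn_exp n (fun y => RInt (rho_rate H u0) 0 y)). destruct n as [|n].
  - intro x. apply (is_derive_continuous_R _ x _ (is_derive_RInt_rho_rate x)).
  - apply Cn_pred, (Cn_S_of_derive (S n) _ (rho_rate H u0)).
    + apply is_derive_RInt_rho_rate.
    + apply rho_rate_Cn.
Qed.

(* With [rho' = rho_rate * rho] this is the linearized equation [B rho' + H_u rho = mu rho]. *)
Lemma rho_linearized x :
  Bfun H u0 x * (rho_rate H u0 x * rho_of H u0 x) + Hu_along H u0 x * rho_of H u0 x
  = mu_of H u0 * rho_of H u0 x.
Proof. unfold rho_rate. field. apply HB. Qed.


Hypothesis Hmu : mu_of H u0 <> 0.

Lemma linearization_positive :
  exists delta, 0 < delta /\ forall x t, 0 <= x <= 1 -> Rabs t <= delta ->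
    let w := mu_of H u0 / Rabs (mu_of H u0) * rho_of H u0 x in
    let w' := mu_of H u0 / Rabs (mu_of H u0) * (rho_rate H u0 x * rho_of H u0 x) in
    0 < dp H x (Derive u0 x - t * w') (u0 x - t * w) * w'
      + du H x (Derive u0 x - t * w') (u0 x - t * w) * w.
Proof.
  destruct (Rabs_sign_unit _ Hmu) as [Hs1 Hsmu].
  set (s := mu_of H u0 / Rabs (mu_of H u0)) in *.
  set (w := fun x => s * rho_of H u0 x).
  set (w' := fun x => s * (rho_rate H u0 x * rho_of H u0 x)).
  assert (Hrho : forall x, continuous (rho_of H u0) x) by exact (rho_Cn 0).
  assert (Hwc : forall x, continuous w x) by (intro x; apply (continuous_mult (fun _ => s)); [apply continuous_const| apply Hrho]).
  assert (Hw'c : forall x, continuous w' x).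
  { intro x. apply (continuous_mult (fun _ => s)); [apply continuous_const|].
    apply (continuous_mult (rho_rate H u0)); [apply rho_rate_continuous| apply Hrho]. }
  destruct (continuous_bounded_on w 0 1 ltac:(lra) Hwc) as [Mw [HMw0 HMw]].
  destruct (continuous_bounded_on w' 0 1 ltac:(lra) Hw'c) as [Mw' [HMw'0 HMw']].
  destruct (continuous_min_on (rho_of H u0) 0 1 ltac:(lra) Hrho) as [m0 [_ Hmin]].
  assert (Hpos : 0 < Rabs (mu_of H u0) * rho_of H u0 m0)
    by (apply Rmult_lt_0_compat; [apply Rabs_pos_lt, Hmu| apply exp_pos]).
  destruct (linearization_uniform H (Derive u0) u0 w w' (Mw + Mw') HS Hu0_c (u0_Cn 0)
    ltac:(intros x Hx; specialize (HMw x Hx); specialize (HMw' x Hx); lra) _ Hpos)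
    as [delta [Hdelta K]].
  exists delta. split; [exact Hdelta|]. intros x t Hx Ht. cbv zeta.
  change (0 < dp H x (Derive u0 x - t * w' x) (u0 x - t * w x) * w' x
    + du H x (Derive u0 x - t * w' x) (u0 x - t * w x) * w x).
  specialize (K x t Hx Ht). apply Rabs_lt_between' in K.
  assert (E0 : dp H x (Derive u0 x) (u0 x) * w' x + du H x (Derive u0 x) (u0 x) * w x
    = Rabs (mu_of H u0) * rho_of H u0 x).
  { fold (Bfun H u0 x) (Hu_along H u0 x). unfold w, w'. rewrite <- Hsmu, Rmult_assoc.
    rewrite <- rho_linearized. ring. }
  assert (Rabs (mu_of H u0) * rho_of H u0 m0 <= Rabs (mu_of H u0) * rho_of H u0 x)
    by (apply Rmult_le_compat_l; [apply Rabs_pos| apply Hmin, Hx]).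
  lra.
Qed.

Lemma is_derive_u_eps e x :
  is_derive (u_eps H u0 e) x
    (Derive u0 x - e * (mu_of H u0 / Rabs (mu_of H u0) * (rho_rate H u0 x * rho_of H u0 x))).
Proof.
  replace (Derive u0 x - e * (mu_of H u0 / Rabs (mu_of H u0) * (rho_rate H u0 x * rho_of H u0 x)))
    with (Derive u0 x - mu_of H u0 / Rabs (mu_of H u0) * e * (rho_rate H u0 x * rho_of H u0 x))
    by ring.
  apply (is_derive_minus u0 (fun y => mu_of H u0 / Rabs (mu_of H u0) * e * rho_of H u0 y));
    [apply Derive_correct, Hu0_d| apply is_derive_scal, is_derive_rho].
Qed.

Lemma H_u_eps_sign : exists eps0, 0 < eps0 /\ forall x e, 0 <= x <= 1 ->
  Rabs e <= eps0 -> e <> 0 -> H x (Derive (u_eps H u0 e) x) (u_eps H u0 e x) * e < 0.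
Proof.
  destruct linearization_positive as [delta [Hdelta Hpos]].
  exists delta. split; [exact Hdelta|]. intros x e Hx He Hne.
  specialize (Hpos x). cbv zeta in Hpos.
  set (w := mu_of H u0 / Rabs (mu_of H u0) * rho_of H u0 x) in *.
  set (w' := mu_of H u0 / Rabs (mu_of H u0) * (rho_rate H u0 x * rho_of H u0 x)) in *.
  rewrite (is_derive_unique _ _ _ (is_derive_u_eps e x)).
  replace (u_eps H u0 e x) with (u0 x - e * w) by (unfold u_eps, w; ring).
  set (phi := fun t => H x (Derive u0 x - t * w') (u0 x - t * w)).
  set (dphi := fun t => - (dp H x (Derive u0 x - t * w') (u0 x - t * w) * w'
                          + du H x (Derive u0 x - t * w') (u0 x - t * w) * w)).
  assert (Hphi : forall t, is_derive phi t (dphi t)) by (intro t; apply is_derive_along_line, HS).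
  destruct (MVT_gen phi 0 e dphi) as [th [Hth Heq]];
    [intros t _; apply Hphi| intros t _; apply continuity_pt_filterlim, (is_derive_continuous_R phi t _ (Hphi t))|].
  assert (Hphi0 : phi 0 = 0).
  { unfold phi. rewrite !Rmult_0_l, !Rminus_0_r. apply Hu0_eq. }
  assert (Hdth : dphi th < 0).
  { unfold dphi. enough (0 < dp H x (Derive u0 x - th * w') (u0 x - th * w) * w'
      + du H x (Derive u0 x - th * w') (u0 x - th * w) * w) by lra.
    apply Hpos; [exact Hx|]. apply Rabs_le_between. apply Rabs_le_between in He.
    unfold Rmin, Rmax in Hth. destruct Rle_dec; lra. }
  change (phi e * e < 0). rewrite Hphi0, !Rminus_0_r in Heq. rewrite Heq.
  replace (dphi th * e * e) with (dphi th * (e * e)) by ring.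
  apply Rmult_neg_pos; [exact Hdth|]. assert (0 < e * e) by (apply Rsqr_pos_lt; exact Hne). lra.
Qed.

Lemma u_eps_periodic_smooth eps : periodic1 (u_eps H u0 eps) /\ smooth1 (u_eps H u0 eps).
Proof.
  split.
  - intro x. unfold u_eps. rewrite Hu0_per, rho_periodic. reflexivity.
  - apply smooth1_of_Cn. intro n. apply Cn_minus; [apply u0_Cn|].
    apply (Cn_mult n (fun _ => mu_of H u0 / Rabs (mu_of H u0) * eps)); [apply Cn_const| apply rho_Cn].
Qed.

End Perturbation.

Theorem lemma2p2 (H : R -> R -> R -> R) (kappa : R) (u0 : R -> R)
  (Hper : forall x p u, H (x + 1) p u = H x p u)
  (Hsmooth : smooth3 H)
  (Hconv : forall x p u, 0 < dp (dp H) x p u)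
  (Hsuper : superlinear_in_p H)
  (Hkappa : 0 < kappa)
  (Hdu : forall x p u, Rabs (du H x p u) <= kappa)
  (Hvisc : viscosity_solution H u0)
  (HB : forall x, ex_derive u0 x -> dp H x (Derive u0 x) (u0 x) <> 0)
  (Hmu : mu_of H u0 <> 0) :
  exists eps0, 0 < eps0 /\
    (forall eps, 0 < eps <= eps0 ->
       periodic1 (u_eps H u0 eps) /\ smooth1 (u_eps H u0 eps) /\
       forall x, 0 <= x <= 1 ->
         H x (Derive (u_eps H u0 eps) x) (u_eps H u0 eps x) < 0) /\
    (forall eps, - eps0 <= eps < 0 ->
       periodic1 (u_eps H u0 eps) /\ smooth1 (u_eps H u0 eps) /\
       forall x, 0 <= x <= 1 ->
         0 < H x (Derive (u_eps H u0 eps) x) (u_eps H u0 eps x)).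
Proof.
  pose proof (proj1 Hvisc) as Hu0_per.
  destruct (cvs_C1 u0 _ _ (viscosity_solution_convex H u0 Hsmooth Hconv Hsuper Hvisc) Hu0_per HB)
    as [Hd [H0 Hc]].
  assert (HBnz : forall x, Bfun H u0 x <> 0) by (intro x; apply HB, Hd).
  pose proof (u_eps_periodic_smooth H u0 Hsmooth Hper Hu0_per Hd Hc H0 HBnz) as Hreg.
  destruct (H_u_eps_sign H u0 Hsmooth Hd Hc H0 HBnz Hmu) as [eps0 [Heps0 Hsign]].
  exists eps0. split; [exact Heps0|]. split.
  - intros eps Heps. split; [apply Hreg|]. split; [apply Hreg|]. intros x Hx.
    specialize (Hsign x eps Hx ltac:(rewrite Rabs_right; lra) ltac:(lra)). nra.
  - intros eps Heps. split; [apply Hreg|]. split; [apply Hreg|]. intros x Hx.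
    specialize (Hsign x eps Hx ltac:(rewrite Rabs_left; lra) ltac:(lra)). nra.
Qed.
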